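(* Let $d\ge2$, $L\in\mathbb{N}$, and let $f:[0,1)^d\to[0,\infty)$ be $L$-piecewise constant. There is a constant $C>0$ depending only on $d$ such that for every $\varepsilon>0$, every integer $k_1\ge L$, every integer $k_2\ge C\|f\|_{L^\infty((0,1)^d)}k_1^{d-1}/\varepsilon^d$, and every $\mathbf{b}\in\Phi(k_1,k_2)$, \[\sum_{j\in\mathcal{H}_{\mathbf b}}p_{\mathbf b,j}^{1/d}\le\bar J+\varepsilon.\]
   Context: $x\leqq y$ means $x_i\le y_i$ for all $i$, $x<y$ means $x_i<y_i$ for all $i$. Extend $f$ by $0$ outside $[0,1)^d$. For a multiindex $\alpha$ with integer entries $1\le\alpha_i\le L$, $Q_{L,\alpha}=\{x\in[0,1)^d:\alpha-(1,\dots,1)\leqq Lx<\alpha\}$; $f$ is $L$-piecewise constant if it is constant on each $Q_{L,\alpha}$. $\mathcal{A}$ is the set of $\gamma\in C^1([0,1];\mathbb{R}^d)$ with all components of $\gamma'(t)$ nonnegative and $\gamma'(t)\ne0$ for every $t$; $J(\gamma)=\int_0^1 f(\gamma(t))^{1/d}(\gamma_1'(t)\cdots\gamma_d'(t))^{1/d}dt$; $\bar J=\sup_{\gamma\in\mathcal{A}}J(\gamma)$. Given integers $k_1,k_2\ge1$, set $\Delta x=1/k_1$ and $\Delta y=\Delta x/k_2$. $\Phi(k_1,k_2)$ is the set of sequences $\mathbf b=(b_j)_{j=1}^{k_1}$ of multiindices $b_j$ with nonnegative integer entries in $\mathbb{N}^{d-1}$ such that $b_1\leqq\cdots\leqq b_{k_1}$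 and $\|b_j\|_\infty\le k_1k_2$. For $\mathbf b\in\Phi(k_1,k_2)$ set $z_{\mathbf b,0}=0\in\mathbb{R}^d$ and $z_{\mathbf b,j}=(b_j\Delta y,\,j\Delta x)\in\mathbb{R}^{d-1}\times\mathbb{R}$ for $j\ge1$; $R_{\mathbf b,j}=\{x\in[0,1)^d:z_{\mathbf b,j-1}-(1,\dots,1,0)\Delta y\leqq x<z_{\mathbf b,j}\}$ for $1\le j\le k_1$; $p_{\mathbf b,j}=\int_{R_{\mathbf b,j}}f(x)\,dx$; and $\mathcal{H}_{\mathbf b}=\{j: R_{\mathbf b,j}\subset Q_{L,\alpha}\text{ for some }\alpha\}$. *)

From Stdlib Require Import Reals Lra Lia.
From Stdlib Require Import ClassicalDescription.
From Coquelicot Require Import Coquelicot.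
Open Scope R_scope.

(* Points of R^d are represented as nat -> R; only coordinates 0..d-1
   (0-based; coordinate i corresponds to the paper's x_{i+1}) matter. *)
Definition vec := nat -> R.

Definition indic (P : Prop) : R :=
  if excluded_middle_informative P then 1 else 0.

Definition in_cube (d : nat) (x : vec) : Prop :=
  forall i, (i < d)%nat -> 0 <= x i < 1.

Definition in_open_cube (d : nat) (x : vec) : Prop :=
  forall i, (i < d)%nat -> 0 < x i < 1.

Definition multiindex (d L : nat) (alpha : nat -> nat) : Prop :=
  forall i, (i < d)%nat -> (1 <= alpha i <= L)%nat.

Definition Qcell (d L : nat) (alpha : nat -> nat) (x : vec) : Prop :=
  in_cube d x /\
  forall i, (i < d)%nat -> INR (alpha i) - 1 <= INR L * x i < INR (alpha i).

Definition piecewise_const (d L : nat) (f : vec -> R) : Prop :=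
  forall alpha, multiindex d L alpha ->
  forall x y, Qcell d L alpha x -> Qcell d L alpha y -> f x = f y.

(* || f ||_{L^infty((0,1)^d)}  (for L-piecewise constant f the
   supremum over the open cube coincides with the essential supremum) *)
Definition Linf_norm (d : nat) (f : vec -> R) : R :=
  real (Lub_Rbar (fun y => exists x, in_open_cube d x /\ y = Rabs (f x))).

Definition droot (d : nat) (x : R) : R :=
  if Rle_dec x 0 then 0 else Rpower x (/ INR d).

Fixpoint prodn (d : nat) (g : nat -> R) : R :=
  match d with
  | O => 1
  | S n => prodn n g * g n
  end.

Definition unit_I (t : R) : Prop := 0 <= t <= 1.

(* gamma in C^1([0,1];R^d) with derivative g: for each coordinate i < d and
   t in [0,1], g t i is the derivative of gamma_i at t relative to [0,1]
   (one-sided at the endpoints), and g _ i is continuous on [0,1]. *)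
Definition C1_with_deriv (d : nat) (gamma g : R -> vec) : Prop :=
  forall i, (i < d)%nat -> forall t, unit_I t ->
    filterlim (fun s => (gamma s i - gamma t i) / (s - t))
      (within (fun s => unit_I s /\ s <> t) (locally t)) (locally (g t i)) /\
    filterlim (fun s => g s i) (within unit_I (locally t)) (locally (g t i)).

Definition admissible (d : nat) (gamma g : R -> vec) : Prop :=
  C1_with_deriv d gamma g /\
  forall t, unit_I t ->
    (forall i, (i < d)%nat -> 0 <= g t i) /\ (exists i, (i < d)%nat /\ g t i <> 0).

Definition Jfun (d : nat) (f : vec -> R) (gamma g : R -> vec) : R :=
  RInt (fun t => droot d (f (gamma t)) * droot d (prodn d (g t))) 0 1.

Definition Jbar (d : nat) (f : vec -> R) : Rbar :=
  Lub_Rbar (fun v => exists gamma g, admissible d gamma g /\ v = Jfun d f gamma g).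

(* Phi(k1,k2): b j i for 1 <= j <= k1 and i < d-1 *)
Definition in_Phi (d k1 k2 : nat) (b : nat -> nat -> nat) : Prop :=
  (forall j i, (1 <= j)%nat -> (j < k1)%nat -> (i < d - 1)%nat -> (b j i <= b (S j) i)%nat) /\
  (forall j i, (1 <= j <= k1)%nat -> (i < d - 1)%nat -> (b j i <= k1 * k2)%nat).

Definition dx (k1 : nat) : R := / INR k1.
Definition dy (k1 k2 : nat) : R := dx k1 / INR k2.

Definition zpt (d k1 k2 : nat) (b : nat -> nat -> nat) (j : nat) : vec :=
  fun i => match j with
           | O => 0
           | S _ => if (i <? d - 1)%nat then INR (b j i) * dy k1 k2 else INR j * dx k1
           end.

Definition Rbox (d k1 k2 : nat) (b : nat -> nat -> nat) (j : nat) (x : vec) : Prop :=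
  in_cube d x /\
  forall i, (i < d)%nat ->
    zpt d k1 k2 b (j - 1) i - (if (i <? d - 1)%nat then dy k1 k2 else 0) <= x i
    /\ x i < zpt d k1 k2 b j i.

(* d-dimensional integral over [0,1]^d, written as an iterated Riemann integral
   over coordinates d-1, ..., 0 *)
Definition upd (x : vec) (n : nat) (s : R) : vec :=
  fun i => if Nat.eqb i n then s else x i.

Fixpoint iint (n : nat) (F : vec -> R) (x : vec) : R :=
  match n with
  | O => F x
  | S m => RInt (fun s => iint m F (upd x m s)) 0 1
  end.

Definition cube_integral (d : nat) (F : vec -> R) : R := iint d F (fun _ => 0).

Definition pbj (d k1 k2 : nat) (f : vec -> R) (b : nat -> nat -> nat) (j : nat) : R :=
  cube_integral d (fun x => indic (Rbox d k1 k2 b j x) * f x).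

Definition inH (d L k1 k2 : nat) (b : nat -> nat -> nat) (j : nat) : Prop :=
  exists alpha, multiindex d L alpha /\
    forall x, Rbox d k1 k2 b j x -> Qcell d L alpha x.

Definition Hsum (d L k1 k2 : nat) (f : vec -> R) (b : nat -> nat -> nat) : R :=
  sum_f 1 k1 (fun j => indic (inH d L k1 k2 b j) * droot d (pbj d k1 k2 f b j)).

(* The curve used to bound [bar J] from below is monotone and crosses the slabs
   [(j - 1) dx <= x_d < j dx] one after the other: on the [j]-th slab it moves from a point just
   below [z_{b,j-1}] to a point just below [z_{b,j}], so it stays inside [R_{b,j}], and its speed
   in each of the first [d - 1] directions is a trapezoidal bump, constant on all but a fraction
   [2 eta] of the slab.  If [j] is in [H_b], [f] equals a constant [c] on [R_{b,j}], so on the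
   plateau the integrand of [J] is at least [(c |B_j|)^(1/d) / dx], where [B_j] is the box of
   increments of the curve; hence the slab contributes at least [(1 - 2 eta) (c |B_j|)^(1/d)].
   [R_{b,j}] exceeds [B_j] by at most [2 dy] in each side, so [p_{b,j} <= c |B_j| + O(||f|| dx dy)].
   Summing over the [k1] slabs, the errors [2 eta ||f||^(1/d) k1 + k1 (C ||f|| dx dy)^(1/d)] are
   at most [eps] once [eta ~ eps / k1] and [k2 >= C ||f|| k1^(d-1) / eps^d]. *)

From Stdlib Require Import Reals Lra Lia ZArith FunctionalExtensionality ClassicalDescription.
From Coquelicot Require Import Coquelicot.
Open Scope R_scope.

(** * Powers and [d]-th roots *)

Lemma pow_lt_pow_l (x y : R) (n : nat) : 0 <= x < y -> (1 <= n)%nat -> x ^ n < y ^ n.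
Proof.
  intros [Hx Hxy] Hn. induction n as [|n IH]; [lia|].
  destruct (Nat.eq_dec n 0) as [->|Hn0]; [simpl; lra|].
  simpl. assert (H := IH ltac:(lia)). assert (0 <= x ^ n) by (apply pow_le; lra).
  apply Rle_lt_trans with (x * y ^ n); [apply Rmult_le_compat_l; lra|].
  apply Rmult_lt_compat_r; lra.
Qed.

Lemma pow_add_ge (a b : R) (n : nat) :
  (1 <= n)%nat -> 0 <= a -> 0 <= b -> a ^ n + b ^ n <= (a + b) ^ n.
Proof.
  intros Hn Ha Hb. induction n as [|n IH]; [lia|].
  destruct (Nat.eq_dec n 0) as [->|Hn0]; [simpl; lra|].
  simpl. assert (H := IH ltac:(lia)).
  assert (0 <= a ^ n) by (apply pow_le; lra). assert (0 <= b ^ n) by (apply pow_le; lra).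
  apply Rle_trans with ((a + b) * (a ^ n + b ^ n)); [nra|].
  apply Rmult_le_compat_l; lra.
Qed.

Section Root.

Variable d : nat.
Hypothesis Hd : (1 <= d)%nat.

Lemma droot_nonneg x : 0 <= droot d x.
Proof. unfold droot. destruct (Rle_dec x 0); [lra|]. left; apply exp_pos. Qed.

Lemma droot_le0 x : x <= 0 -> droot d x = 0.
Proof. unfold droot. destruct (Rle_dec x 0); lra. Qed.

Lemma droot_pow x : 0 <= x -> droot d x ^ d = x.
Proof.
  intros Hx. unfold droot. destruct (Rle_dec x 0).
  - replace x with 0 by lra. apply pow_i. lia.
  - rewrite <- Rpower_pow by apply exp_pos.
    rewrite Rpower_mult, Rinv_l, Rpower_1 by (lra || apply not_0_INR; lia). reflexivity.
Qed.

Lemma droot_le_of_le_pow x y : 0 <= y -> x <= y ^ d -> droot d x <= y.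
Proof.
  intros Hy H. destruct (Rle_dec x 0) as [Hx|Hx]; [rewrite droot_le0; lra|].
  destruct (Rle_lt_dec (droot d x) y) as [|Hlt]; [assumption|].
  assert (y ^ d < droot d x ^ d) by (apply pow_lt_pow_l; auto).
  rewrite droot_pow in * by lra. lra.
Qed.

Lemma le_droot_of_pow_le x y : 0 <= y -> y ^ d <= x -> y <= droot d x.
Proof.
  intros Hy H. assert (Hx : 0 <= x) by (eapply Rle_trans; [apply pow_le|]; eauto).
  destruct (Rle_lt_dec y (droot d x)) as [|Hlt]; [assumption|].
  assert (droot d x ^ d < y ^ d) by (apply pow_lt_pow_l; auto using droot_nonneg).
  rewrite droot_pow in * by lra. lra.
Qed.

Lemma droot_of_pow y : 0 <= y -> droot d (y ^ d) = y.
Proof.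
  intros. apply Rle_antisym; [apply droot_le_of_le_pow|apply le_droot_of_pow_le]; lra.
Qed.

Lemma droot_le x y : x <= y -> droot d x <= droot d y.
Proof.
  intros H. destruct (Rle_dec x 0) as [Hx|Hx]; [rewrite droot_le0 by lra; apply droot_nonneg|].
  apply droot_le_of_le_pow; [apply droot_nonneg|]. rewrite droot_pow; lra.
Qed.

Lemma droot_mult x y : 0 <= x -> 0 <= y -> droot d (x * y) = droot d x * droot d y.
Proof.
  intros Hx Hy. rewrite <- (droot_pow x), <- (droot_pow y) at 1 by assumption.
  rewrite <- Rpow_mult_distr. apply droot_of_pow.
  apply Rmult_le_pos; apply droot_nonneg.
Qed.

Lemma droot_add_le x y : 0 <= x -> 0 <= y -> droot d (x + y) <= droot d x + droot d y.
Proof.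
  intros Hx Hy. pose proof (droot_nonneg x); pose proof (droot_nonneg y).
  apply droot_le_of_le_pow; [lra|].
  rewrite <- (droot_pow x), <- (droot_pow y) at 1 by assumption.
  apply pow_add_ge; assumption.
Qed.

Lemma continuous_droot x : continuous (droot d) x.
Proof.
  apply continuity_pt_filterlim, continuity_pt_locally. intros eps.
  pose proof (droot_nonneg x) as Hy0. pose proof (cond_pos eps). set (y0 := droot d x) in *.
  set (xh := (y0 + eps / 2) ^ d).
  assert (Hxh : x < xh).
  { destruct (Rle_dec x 0); [apply Rle_lt_trans with 0; [lra|apply pow_lt; lra]|].
    unfold xh. rewrite <- (droot_pow x) by lra. apply pow_lt_pow_l; auto; fold y0; lra. }
  assert (Hdh : droot d xh = y0 + eps / 2) by (apply droot_of_pow; lra).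
  destruct (Rlt_dec 0 (y0 - eps / 2)) as [Hp|Hp].
  - set (xl := (y0 - eps / 2) ^ d).
    assert (Hx0 : 0 < x).
    { destruct (Rle_dec x 0) as [Hx|Hx]; [|lra]. unfold y0 in Hp. rewrite droot_le0 in Hp; lra. }
    assert (Hxl : xl < x).
    { unfold xl. rewrite <- (droot_pow x) by lra. apply pow_lt_pow_l; auto; fold y0; lra. }
    assert (Hdl : droot d xl = y0 - eps / 2) by (apply droot_of_pow; lra).
    assert (Hm : 0 < Rmin (x - xl) (xh - x)) by (apply Rmin_glb_lt; lra).
    exists (mkposreal _ Hm). intros u Hu. apply Rabs_def2 in Hu. unfold minus, plus, opp in Hu; simpl in Hu.
    pose proof (Rmin_l (x - xl) (xh - x)); pose proof (Rmin_r (x - xl) (xh - x)).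
    assert (droot d xl <= droot d u) by (apply droot_le; lra).
    assert (droot d u <= droot d xh) by (apply droot_le; lra).
    apply Rabs_def1; fold y0; lra.
  - assert (Hm : 0 < xh - x) by lra.
    exists (mkposreal _ Hm). intros u Hu. apply Rabs_def2 in Hu. unfold minus, plus, opp in Hu; simpl in Hu.
    assert (droot d u <= droot d xh) by (apply droot_le; lra).
    pose proof (droot_nonneg u). apply Rabs_def1; fold y0; lra.
Qed.

End Root.

(** * Finite sums and products *)

Fixpoint rsum (n : nat) (F : nat -> R) : R :=
  match n with O => 0 | S m => rsum m F + F m end.

Lemma rsum_ext n F G : (forall l, (l < n)%nat -> F l = G l) -> rsum n F = rsum n G.
Proof. induction n; simpl; intros H; auto. rewrite IHn, H by (try intros; try apply H; lia). auto. Qed.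

Lemma rsum_le n F G : (forall l, (l < n)%nat -> F l <= G l) -> rsum n F <= rsum n G.
Proof.
  induction n; simpl; intros H; [lra|].
  assert (rsum n F <= rsum n G) by (apply IHn; intros; apply H; lia).
  specialize (H n ltac:(lia)). lra.
Qed.

Lemma rsum_plus n F G : rsum n (fun l => F l + G l) = rsum n F + rsum n G.
Proof. induction n; simpl; [lra|]. rewrite IHn; ring. Qed.

Lemma rsum_const n c : rsum n (fun _ => c) = INR n * c.
Proof. induction n; simpl rsum; [simpl; ring|]. rewrite IHn, S_INR; ring. Qed.

Lemma rsum_nonneg n F : (forall l, (l < n)%nat -> 0 <= F l) -> 0 <= rsum n F.
Proof. intros H. rewrite <- (Rmult_0_r (INR n)), <- rsum_const. apply rsum_le, H. Qed.

Lemma rsum_single n F l0 :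
  (l0 < n)%nat -> (forall l, (l < n)%nat -> l <> l0 -> F l = 0) -> rsum n F = F l0.
Proof.
  induction n; simpl; intros Hl H; [lia|].
  destruct (Nat.eq_dec l0 n) as [->|Hne].
  - rewrite (rsum_ext n F (fun _ => 0)), rsum_const by (intros; apply H; lia). ring.
  - rewrite IHn, (H n) by (auto; try lia; intros; apply H; lia). ring.
Qed.

Lemma rsum_sum_f (G : nat -> R) n : (1 <= n)%nat -> sum_f 1 n G = rsum n (fun l => G (S l)).
Proof.
  intros Hn. unfold sum_f. replace (n - 1)%nat with (Nat.pred n) by lia.
  destruct n as [|n]; [lia|]. simpl Nat.pred. clear Hn.
  induction n; simpl; [ring|]. rewrite IHn. simpl. f_equal. f_equal. lia.
Qed.

Lemma continuous_rsum n (F : nat -> R -> R) x :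
  (forall l, (l < n)%nat -> continuous (F l) x) -> continuous (fun t => rsum n (fun l => F l t)) x.
Proof.
  induction n; simpl; intros H; [apply continuous_const|].
  apply (continuous_plus (fun t => rsum n (fun l => F l t)) (F n)); [apply IHn; intros|]; apply H; lia.
Qed.

Lemma is_RInt_rsum n (F : nat -> R -> R) (I : nat -> R) a b :
  (forall l, (l < n)%nat -> is_RInt (F l) a b (I l)) ->
  is_RInt (fun t => rsum n (fun l => F l t)) a b (rsum n I).
Proof.
  induction n; simpl; intros H.
  - pose proof (@is_RInt_const R_NormedModule a b 0) as H0. 
    change (scal (b - a) 0) with ((b - a) * 0) in H0. rewrite Rmult_0_r in H0. exact H0.
  - apply (@is_RInt_plus R_NormedModule (fun t => rsum n (fun l => F l t)) (F n));
      [apply IHn; intros|]; apply H; lia.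
Qed.

Fixpoint nsum (n : nat) (w : nat -> nat) : nat :=
  match n with O => O | S m => (nsum m w + w m)%nat end.

Lemma nsum_le n w w' : (forall j, (j < n)%nat -> (w' j <= w j)%nat) -> (nsum n w' <= nsum n w)%nat.
Proof.
  induction n; simpl; intros H; [lia|].
  specialize (IHn (fun j Hj => H j ltac:(lia))). specialize (H n ltac:(lia)). lia.
Qed.

Lemma nsum_lt n w w' i : (i < n)%nat -> (forall j, (j < n)%nat -> (w' j <= w j)%nat) ->
  (w' i < w i)%nat -> (nsum n w' < nsum n w)%nat.
Proof.
  induction n; simpl; intros Hi H Hl; [lia|].
  destruct (Nat.eq_dec i n) as [->|Hne].
  - assert (nsum n w' <= nsum n w)%nat by (apply nsum_le; intros; apply H; lia). lia.
  - assert (nsum n w' < nsum n w)%nat by (apply IHn; auto; try lia; intros; apply H; lia).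
    specialize (H n ltac:(lia)). lia.
Qed.

Lemma prodn_ext n w w' : (forall i, (i < n)%nat -> w i = w' i) -> prodn n w = prodn n w'.
Proof. induction n; simpl; intros H; auto. rewrite IHn, H by (try intros; try apply H; lia). auto. Qed.

Lemma prodn_nonneg n w : (forall i, (i < n)%nat -> 0 <= w i) -> 0 <= prodn n w.
Proof. induction n; simpl; intros H; [lra|]. apply Rmult_le_pos; [apply IHn; intros|]; apply H; lia. Qed.

Lemma prodn_le n w w' : (forall i, (i < n)%nat -> 0 <= w i <= w' i) -> prodn n w <= prodn n w'.
Proof.
  induction n; simpl; intros H; [lra|].
  apply Rmult_le_compat; try apply prodn_nonneg; try apply IHn; intros; try apply H; lia.
Qed.

Lemma prodn_const n c : prodn n (fun _ => c) = c ^ n.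
Proof. induction n; simpl; [auto|]. rewrite IHn. ring. Qed.

Lemma prodn_scal n w s : prodn n (fun i => w i * s) = prodn n w * s ^ n.
Proof. induction n; simpl; [ring|]. rewrite IHn. ring. Qed.

Lemma prodn_factor n w m : (m < n)%nat ->
  prodn n w = w m * prodn n (fun i => if Nat.eqb i m then 1 else w i).
Proof.
  induction n; simpl; intros Hm; [lia|].
  destruct (Nat.eq_dec m n) as [->|Hne].
  - rewrite Nat.eqb_refl, (prodn_ext n w (fun i => if Nat.eqb i n then 1 else w i)); [ring|].
    intros i Hi. destruct (Nat.eqb_spec i n); auto; lia.
  - rewrite IHn by lia. destruct (Nat.eqb_spec n m); [lia|]. ring.
Qed.

Lemma continuous_prodn n (w : R -> nat -> R) x :
  (forall i, (i < n)%nat -> continuous (fun t => w t i) x) -> continuous (fun t => prodn n (w t)) x.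
Proof.
  induction n; simpl; intros H; [apply continuous_const|].
  apply (continuous_mult (fun t => prodn n (w t)) (fun t => w t n)); [apply IHn; intros|]; apply H; lia.
Qed.

Lemma prodn_sub_le n x y e : 0 <= e ->
  (forall i, (i < n)%nat -> 0 <= x i <= y i /\ y i <= 3 /\ y i - x i <= e) ->
  prodn n y - prodn n x <= INR n * 3 ^ n * e.
Proof.
  intros He. induction n; intros H; [simpl; lra|].
  change (prodn n y * y n - prodn n x * x n <= INR (S n) * (3 * 3 ^ n) * e).
  assert (IH := IHn (fun i Hi => H i ltac:(lia))). destruct (H n ltac:(lia)) as [[H1 H2] [H3 H4]].
  assert (Hin : forall i, (i < n)%nat -> 0 <= x i <= y i /\ 0 <= y i <= 3)
    by (intros i Hi; destruct (H i ltac:(lia)) as [? [? _]]; lra).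
  assert (Py : prodn n y <= 3 ^ n) by (rewrite <- prodn_const; apply prodn_le; intros i Hi; apply Hin; lia).
  assert (Px0 : 0 <= prodn n x) by (apply prodn_nonneg; intros i Hi; apply Hin; lia).
  assert (Pxy : prodn n x <= prodn n y) by (apply prodn_le; intros i Hi; apply Hin; lia).
  assert (P3 : 0 < 3 ^ n) by (apply pow_lt; lra).
  pose proof (pos_INR n). rewrite S_INR.
  replace (prodn n y * y n - prodn n x * x n)
    with (prodn n y * (y n - x n) + x n * (prodn n y - prodn n x)) by ring.
  assert (prodn n y * (y n - x n) <= 3 ^ n * e) by (apply Rmult_le_compat; lra).
  assert (x n * (prodn n y - prodn n x) <= 3 * (INR n * 3 ^ n * e)) by (apply Rmult_le_compat; lra).
  assert (0 <= INR n * 3 ^ n * e) by (repeat apply Rmult_le_pos; lra).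
  nra.
Qed.

Lemma rsum_truncate n m F : (m <= n)%nat ->
  rsum n (fun l => if Nat.ltb l m then F l else 0) = rsum m F.
Proof.
  induction n; intros Hm; [replace m with 0%nat by lia; reflexivity|].
  destruct (Nat.eq_dec m (S n)) as [->|Hne].
  - apply rsum_ext. intros l Hl. destruct (Nat.ltb_spec l (S n)); [reflexivity|lia].
  - simpl. rewrite IHn by lia. destruct (Nat.ltb_spec n m); [lia|ring].
Qed.

(** * Continuity and integrals *)

Lemma continuous_lipschitz (f : R -> R) K x :
  (forall u v, Rabs (f u - f v) <= K * Rabs (u - v)) -> continuous f x.
Proof.
  intros H. apply continuity_pt_filterlim, continuity_pt_locally. intros eps.
  assert (Hk : 0 < Rabs K + 1) by (pose proof (Rabs_pos K); lra).
  assert (Hd : 0 < eps / (Rabs K + 1)) by (apply Rdiv_lt_0_compat; [apply cond_pos|lra]).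
  exists (mkposreal _ Hd). intros u Hu. simpl in Hu.
  apply Rle_lt_trans with (K * Rabs (u - x)); [apply H|].
  apply Rle_lt_trans with ((Rabs K + 1) * Rabs (u - x)).
  { pose proof (Rabs_pos (u - x)). pose proof (Rle_abs K). nra. }
  apply Rmult_lt_reg_l with (/ (Rabs K + 1)); [apply Rinv_0_lt_compat; lra|].
  rewrite <- Rmult_assoc, Rinv_l, Rmult_1_l by lra. rewrite Rmult_comm. exact Hu.
Qed.

Lemma ex_RInt_ext_le (f g : R -> R) a b : a <= b ->
  (forall x, a < x < b -> f x = g x) -> ex_RInt f a b -> ex_RInt g a b.
Proof. intros Hab H. apply ex_RInt_ext. rewrite Rmin_left, Rmax_right by lra. exact H. Qed.

Lemma ex_RInt_continuous_R (g : R -> R) a b : (forall x, continuous g x) -> ex_RInt g a b.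
Proof. intros H. apply (@ex_RInt_continuous R_CompleteNormedModule). intros; auto. Qed.

Lemma is_RInt_const_R (a b c : R) : is_RInt (fun _ => c) a b ((b - a) * c).
Proof. exact (@is_RInt_const R_NormedModule a b c). Qed.

Lemma is_RInt_Chasles_R (f : R -> R) a b c l1 l2 :
  is_RInt f a b l1 -> is_RInt f b c l2 -> is_RInt f a c (l1 + l2).
Proof. exact (@is_RInt_Chasles R_NormedModule f a b c l1 l2). Qed.

Lemma is_RInt_ext_R (f g : R -> R) a b l :
  (forall x, Rmin a b < x < Rmax a b -> f x = g x) -> is_RInt f a b l -> is_RInt g a b l.
Proof. exact (@is_RInt_ext R_NormedModule f g a b l). Qed.

Lemma is_RInt_eq (f : R -> R) a b (l l' : R) : is_RInt f a b l -> l = l' -> is_RInt f a b l'.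
Proof. intros H <-. exact H. Qed.

Lemma ex_RInt_sub (F : R -> R) a b a' b' : a <= a' -> a' <= b' -> b' <= b ->
  ex_RInt F a b -> ex_RInt F a' b'.
Proof.
  intros H1 H2 H3 H. apply (@ex_RInt_Chasles_1 R_CompleteNormedModule) with b; [lra|].
  apply (@ex_RInt_Chasles_2 R_CompleteNormedModule) with a; [lra|assumption].
Qed.

Lemma RInt_ge_0_le (g : R -> R) s t : (forall x, continuous g x) -> (forall x, 0 <= g x) ->
  s <= t -> RInt g 0 s <= RInt g 0 t.
Proof.
  intros Hc Hp Hst.
  rewrite <- (@RInt_Chasles R_CompleteNormedModule g 0 s t) by (apply ex_RInt_continuous_R; auto).
  assert (0 <= RInt g s t) by (apply RInt_ge_0; auto; apply ex_RInt_continuous_R; auto).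
  simpl. unfold plus; simpl. lra.
Qed.

Lemma filterlim_within_derive (F : R -> R) t l (P : R -> Prop) : is_derive F t l ->
  filterlim (fun s => (F s - F t) / (s - t))
    (within (fun s => P s /\ s <> t) (locally t)) (locally l).
Proof.
  intros H. apply is_derive_Reals in H. apply filterlim_locally. intros eps.
  destruct (H eps (cond_pos eps)) as [delta Hd].
  exists delta. intros y Hy [_ Hyt]. change R in y.
  unfold ball in Hy |- *; simpl in Hy |- *.
  unfold AbsRing_ball, abs, minus, plus, opp in Hy |- *; simpl in Hy |- *.
  specialize (Hd (y - t) ltac:(lra) Hy). replace (t + (y - t)) with y in Hd by ring. exact Hd.
Qed.

Lemma filterlim_within_continuous (F : R -> R) t (P : R -> Prop) :
  continuous F t -> filterlim F (within P (locally t)) (locally (F t)).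
Proof. intros H. eapply filterlim_filter_le_1; [apply filter_le_within|exact H]. Qed.

Lemma is_derive_RInt_0 (g : R -> R) t :
  (forall x, continuous g x) -> is_derive (fun s => RInt g 0 s) t (g t).
Proof.
  intros Hg. apply (is_derive_RInt g (fun s => RInt g 0 s) 0 t); [|apply Hg].
  exists (mkposreal 1 Rlt_0_1). intros y _. apply (@RInt_correct R_CompleteNormedModule).
  apply ex_RInt_continuous_R. assumption.
Qed.

Lemma RInt_ge_plateau (F : R -> R) a b eta v : a < b -> 0 < eta < 1/2 -> ex_RInt F a b ->
  (forall t, a < t < b -> 0 <= F t) ->
  (forall t, a + eta * (b - a) <= t <= b - eta * (b - a) -> v <= F t) ->
  (1 - 2 * eta) * (b - a) * v <= RInt F a b.
Proof.
  intros Hab He Hex H0 Hv.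
  set (a' := a + eta * (b - a)) in *. set (b' := b - eta * (b - a)) in *.
  assert (a <= a' <= b' /\ b' <= b) by (unfold a', b'; nra).
  assert (Hsub : forall u w, a <= u -> u <= w -> w <= b -> ex_RInt F u w)
    by (intros; apply ex_RInt_sub with a b; assumption).
  rewrite <- (@RInt_Chasles R_CompleteNormedModule F a a' b),
    <- (@RInt_Chasles R_CompleteNormedModule F a' b' b)
    by (apply Hsub; lra).
  assert (0 <= RInt F a a') by (apply RInt_ge_0; [lra|apply Hsub; lra|intros; apply H0; lra]).
  assert (0 <= RInt F b' b) by (apply RInt_ge_0; [lra|apply Hsub; lra|intros; apply H0; lra]).
  assert (Hmid : RInt (fun _ => v) a' b' <= RInt F a' b')
    by (apply RInt_le; [lra|apply ex_RInt_const|apply Hsub; lra|intros; apply Hv; lra]).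
  rewrite RInt_const in Hmid. change (scal (b' - a') v) with ((b' - a') * v) in Hmid.
  replace ((1 - 2 * eta) * (b - a) * v) with ((b' - a') * v) by (unfold a', b'; ring).
  simpl. unfold plus; simpl. lra.
Qed.

Lemma indic_true (P : Prop) : P -> indic P = 1.
Proof. unfold indic. destruct (excluded_middle_informative P); tauto. Qed.

Lemma indic_false (P : Prop) : ~ P -> indic P = 0.
Proof. unfold indic. destruct (excluded_middle_informative P); tauto. Qed.

Lemma indic_forall n (P : nat -> Prop) :
  indic (forall i, (i < n)%nat -> P i) = prodn n (fun i => indic (P i)).
Proof.
  induction n; simpl; [apply indic_true; intros; lia|]. rewrite <- IHn.
  destruct (classic (P n)) as [Hp|Hp].
  - rewrite (indic_true (P n)), Rmult_1_r by assumption.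
    destruct (classic (forall i, (i < n)%nat -> P i)) as [H|H].
    + rewrite !indic_true; [reflexivity|assumption|].
      intros i Hi. destruct (Nat.eq_dec i n); [subst; assumption|apply H; lia].
    + rewrite !indic_false; [reflexivity|assumption|]. intro H'; apply H; intros; apply H'; lia.
  - rewrite (indic_false (P n)), Rmult_0_r by assumption. apply indic_false.
    intro H; apply Hp, H; lia.
Qed.

Lemma is_RInt_indic_interval lo up : exists I,
  is_RInt (fun t => indic ((0 <= t < 1) /\ lo <= t < up)) 0 1 I /\ 0 <= I <= Rmax 0 (up - lo).
Proof.
  (* [A, B) is [lo, up) clamped to [0, 1] *)
  set (A := Rmin 1 (Rmax 0 lo)). set (B := Rmax A (Rmin 1 up)).
  assert (HAB : 0 <= A <= B /\ B <= 1) by (unfold B, A, Rmin, Rmax; repeat destruct Rle_dec; lra).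
  exists (0 + (B - A) * 1 + 0). split; [|unfold B, A, Rmin, Rmax; repeat destruct Rle_dec; lra].
  apply is_RInt_Chasles_R with B; [apply is_RInt_Chasles_R with A|].
  - apply is_RInt_ext_R with (fun _ => 0);
      [|apply is_RInt_eq with ((A - 0) * 0); [apply is_RInt_const_R|ring]].
    rewrite Rmin_left, Rmax_right by lra. intros t Ht. symmetry. apply indic_false.
    unfold B, A, Rmin, Rmax in *; repeat destruct Rle_dec; lra.
  - apply is_RInt_ext_R with (fun _ => 1); [|apply is_RInt_const_R].
    rewrite Rmin_left, Rmax_right by lra. intros t Ht. symmetry. apply indic_true.
    unfold B, A, Rmin, Rmax in *; repeat destruct Rle_dec; lra.
  - apply is_RInt_ext_R with (fun _ => 0);
      [|apply is_RInt_eq with ((1 - B) * 0); [apply is_RInt_const_R|ring]].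
    rewrite Rmin_left, Rmax_right by lra. intros t Ht. symmetry. apply indic_false.
    unfold B, A, Rmin, Rmax in *; repeat destruct Rle_dec; lra.
Qed.

Lemma iint_zero m y : iint m (fun _ => 0) y = 0.
Proof.
  revert y. induction m; intros y; simpl; [reflexivity|].
  rewrite (RInt_ext _ (fun _ => 0)) by (intros; apply IHm).
  rewrite RInt_const. unfold scal; simpl; unfold mult; simpl. ring.
Qed.

Lemma iint_prodn d (c : R) (e : nat -> R -> R) :
  (forall i, (i < d)%nat -> ex_RInt (e i) 0 1) ->
  forall m, (m <= d)%nat -> forall y,
  iint m (fun x => c * prodn d (fun i => e i (x i))) y =
  c * prodn d (fun i => if Nat.ltb i m then RInt (e i) 0 1 else e i (y i)).
Proof.
  intros He m. induction m as [|m IH]; intros Hm y; [reflexivity|]. simpl.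
  set (K := c * prodn d (fun i => if Nat.eqb i m then 1
                                  else if Nat.ltb i m then RInt (e i) 0 1 else e i (y i))).
  rewrite (RInt_ext _ (fun s => K * e m s)).
  - transitivity (K * RInt (e m) 0 1);
      [exact (@RInt_scal R_CompleteNormedModule (e m) 0 1 K (He m ltac:(lia)))|].
    unfold K. rewrite (prodn_factor d (fun i => if Nat.ltb i (S m) then RInt (e i) 0 1 else e i (y i)) m)
      by lia. cbv beta.
    replace (Nat.ltb m (S m)) with true by (symmetry; apply Nat.ltb_lt; lia).
    rewrite (prodn_ext d (fun i => if Nat.eqb i m then 1 else if Nat.ltb i m then RInt (e i) 0 1 else e i (y i))
               (fun i => if Nat.eqb i m then 1 else if Nat.ltb i (S m) then RInt (e i) 0 1 else e i (y i)));
      [ring|].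
    intros i Hi. destruct (Nat.eqb_spec i m); [reflexivity|].
    destruct (Nat.ltb_spec i m), (Nat.ltb_spec i (S m)); reflexivity || lia.
  - intros s _. rewrite IH by lia. unfold K. rewrite (prodn_factor d _ m) by lia. cbv beta.
    rewrite Nat.ltb_irrefl. unfold upd at 1. rewrite Nat.eqb_refl.
    rewrite (Rmult_comm (e m s)), Rmult_assoc. f_equal. f_equal. apply prodn_ext. intros i Hi.
    unfold upd. destruct (Nat.eqb_spec i m); reflexivity.
Qed.

Lemma nat_nondecreasing_jump (kappa : R -> nat) a b : a <= b ->
  (forall s t, a <= s -> s <= t -> t <= b -> (kappa s <= kappa t)%nat) ->
  (kappa a < kappa b)%nat ->
  exists s, a <= s <= b /\ (forall t, a <= t < s -> kappa t = kappa a) /\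
    (forall t, s < t <= b -> (kappa a < kappa t)%nat).
Proof.
  intros Hab Hmon Hlt.
  set (Sset := fun t => a <= t <= b /\ (kappa t <= kappa a)%nat).
  destruct (completeness Sset) as [s [Hub Hlub]].
  { exists b. intros t [Ht _]. lra. }
  { exists a. split; [lra|lia]. }
  assert (Has : a <= s) by (apply Hub; split; [lra|lia]).
  assert (Hsb : s <= b) by (apply Hlub; intros t [Ht _]; lra).
  exists s. split; [lra|split].
  - intros t Ht. destruct (classic (exists t', Sset t' /\ t < t')) as [[t' [[Ht1 Ht2] Ht3]]|Hn].
    + assert (kappa a <= kappa t)%nat by (apply Hmon; lra).
      assert (kappa t <= kappa t')%nat by (apply Hmon; lra). lia.
    + exfalso. assert (s <= t); [|lra]. apply Hlub. intros x Hx.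
      destruct (Rle_dec x t); [assumption|]. exfalso; apply Hn; exists x; split; [assumption|lra].
  - intros t Ht. destruct (Nat.lt_ge_cases (kappa a) (kappa t)) as [|Hge]; [assumption|].
    exfalso. assert (t <= s) by (apply Hub; split; [lra|lia]). lra.
Qed.

Section StepIntegrand.

Variable n : nat.
Variable Phi : (nat -> nat) -> R.
Variable G : R -> R.
Hypothesis Phi_ext : forall k k', (forall i, (i < n)%nat -> k i = k' i) -> Phi k = Phi k'.
Hypothesis G_cont : forall t, continuous G t.

Definition nondecreasing_on (a b : R) (k : nat -> R -> nat) : Prop :=
  forall i s t, (i < n)%nat -> a <= s -> s <= t -> t <= b -> (k i s <= k i t)%nat.

Lemma ex_RInt_step_mult_const a b (k : nat -> R -> nat) : a <= b ->
  (forall i t, (i < n)%nat -> a < t < b -> k i t = k i a) ->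
  ex_RInt (fun t => Phi (fun i => k i t) * G t) a b.
Proof.
  intros Hab Hk.
  apply ex_RInt_ext_le with (fun t => Phi (fun i => k i a) * G t); [assumption| |].
  - intros t Ht. f_equal. apply Phi_ext. intros i Hi. symmetry; apply Hk; [assumption|lra].
  - apply ex_RInt_continuous_R. intros t.
    apply (continuous_mult (fun _ => Phi (fun i => k i a)) G); [apply continuous_const|apply G_cont].
Qed.

(* Induction on the total number of jumps of the indices [k i] on [a, b]. *)
Lemma ex_RInt_step_mult_jumps N : forall a b (k : nat -> R -> nat),
  a <= b -> nondecreasing_on a b k ->
  (nsum n (fun i => k i b - k i a) <= N)%nat ->
  ex_RInt (fun t => Phi (fun i => k i t) * G t) a b.
Proof.
  induction N as [|N IH]; intros a b k Hab Hmon HN;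
    (destruct (classic (exists i, (i < n)%nat /\ (k i a < k i b)%nat)) as [[i [Hi Hlt]]|Hno];
     [|apply ex_RInt_step_mult_const; [assumption|];
       intros i t Hi Ht; assert (k i a <= k i t <= k i b)%nat by (split; apply Hmon; (assumption || lra));
       assert (~ (k i a < k i b)%nat) by (intro; apply Hno; eauto); lia]).
  - exfalso. assert (nsum n (fun _ => 0%nat) < nsum n (fun i => k i b - k i a))%nat; [|lia].
    apply nsum_lt with i; [assumption|lia|lia].
  - destruct (nat_nondecreasing_jump (k i) a b Hab) as [s [[Has Hsb] [Hleft Hright]]];
      [intros; apply Hmon; assumption|assumption|].
    assert (Hks : forall j, (j < n)%nat -> (k j a <= k j s <= k j b)%nat)
      by (intros j Hj; split; apply Hmon; (assumption || lra)).
    (* Freezing [k i] on [a, s] and lifting it above [k i a] on [s, b] changes nothing on the open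
       pieces and removes at least one jump on each. *)
    apply ex_RInt_Chasles with s.
    + set (kL := fun j t => if Nat.eqb j i then k i a else k j t).
      apply ex_RInt_ext_le with (fun t => Phi (fun j => kL j t) * G t); [assumption| |].
      { intros t Ht. f_equal. apply Phi_ext. intros j Hj. unfold kL.
        destruct (Nat.eqb_spec j i); [subst; symmetry; apply Hleft; lra|reflexivity]. }
      apply (IH a s kL); [assumption| |].
      * intros j u v Hj H1 H2 H3. unfold kL. destruct (Nat.eqb j i); [lia|apply Hmon; (assumption || lra)].
      * apply Nat.lt_succ_r. eapply Nat.lt_le_trans; [|exact HN]. apply nsum_lt with i; [assumption| |].
        -- intros j Hj. unfold kL. destruct (Nat.eqb_spec j i); [lia|specialize (Hks j Hj); lia].
        -- unfold kL. rewrite Nat.eqb_refl. lia.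
    + set (kR := fun j t => if Nat.eqb j i then Nat.max (k i t) (S (k i a)) else k j t).
      apply ex_RInt_ext_le with (fun t => Phi (fun j => kR j t) * G t); [assumption| |].
      { intros t Ht. f_equal. apply Phi_ext. intros j Hj. unfold kR.
        destruct (Nat.eqb_spec j i); [subst; assert (H' := Hright t ltac:(lra)); lia|reflexivity]. }
      apply (IH s b kR); [assumption| |].
      * intros j u v Hj H1 H2 H3. unfold kR. destruct (Nat.eqb j i);
          [assert (k i u <= k i v)%nat by (apply Hmon; (assumption || lra)); lia
          |apply Hmon; (assumption || lra)].
      * apply Nat.lt_succ_r. eapply Nat.lt_le_trans; [|exact HN]. apply nsum_lt with i; [assumption| |].
        -- intros j Hj. unfold kR. destruct (Nat.eqb_spec j i); [subst; lia|specialize (Hks j Hj); lia].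
        -- unfold kR. rewrite Nat.eqb_refl. lia.
Qed.

Lemma ex_RInt_step_mult a b (k : nat -> R -> nat) :
  a <= b -> nondecreasing_on a b k -> ex_RInt (fun t => Phi (fun i => k i t) * G t) a b.
Proof. intros Hab Hmon. apply (ex_RInt_step_mult_jumps _ a b k Hab Hmon (le_n _)). Qed.

End StepIntegrand.

(** * Grid, bumps and the curve *)

Lemma dx_pos k1 : (1 <= k1)%nat -> 0 < dx k1.
Proof. intros. unfold dx. apply Rinv_0_lt_compat, lt_0_INR. lia. Qed.

Lemma INR_mult_dx k1 : (1 <= k1)%nat -> INR k1 * dx k1 = 1.
Proof. intros. unfold dx. field. apply not_0_INR. lia. Qed.

Lemma grid_le_1 k1 m : (1 <= k1)%nat -> (m <= k1)%nat -> 0 <= INR m * dx k1 <= 1.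
Proof.
  intros Hk Hm. pose proof (dx_pos k1 Hk). rewrite <- (INR_mult_dx k1 Hk).
  split; [apply Rmult_le_pos; [apply pos_INR|lra]|apply Rmult_le_compat_r; [lra|apply le_INR; lia]].
Qed.

Lemma dy_pos k1 k2 : (1 <= k1)%nat -> (1 <= k2)%nat -> 0 < dy k1 k2.
Proof. intros. apply Rdiv_lt_0_compat; [apply dx_pos|apply lt_0_INR]; lia. Qed.

Lemma INR_mult_dy k1 k2 : (1 <= k1)%nat -> (1 <= k2)%nat -> INR (k1 * k2) * dy k1 k2 = 1.
Proof. intros. unfold dy, dx. rewrite mult_INR. field. split; apply not_0_INR; lia. Qed.

Lemma dx_le_1 k1 : (1 <= k1)%nat -> dx k1 <= 1.
Proof. intros. pose proof (grid_le_1 k1 1 H H). simpl in H0. lra. Qed.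

Lemma dy_le_1 k1 k2 : (1 <= k1)%nat -> (1 <= k2)%nat -> dy k1 k2 <= 1.
Proof.
  intros. pose proof (dy_pos k1 k2 H H0). rewrite <- (INR_mult_dy k1 k2) by assumption.
  assert (1 <= INR (k1 * k2)) by (apply (le_INR 1); nia). nra.
Qed.

Lemma RInt_slabs (F : R -> R) k1 : (1 <= k1)%nat -> ex_RInt F 0 1 ->
  RInt F 0 1 = rsum k1 (fun l => RInt F (INR l * dx k1) (INR (S l) * dx k1)).
Proof.
  intros Hk Hex.
  assert (Hm : forall m, (m <= k1)%nat ->
    RInt F 0 (INR m * dx k1) = rsum m (fun l => RInt F (INR l * dx k1) (INR (S l) * dx k1))).
  { induction m; intros Hm; [simpl; rewrite Rmult_0_l; exact (@RInt_point R_CompleteNormedModule 0 F)|].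
    cbn [rsum]. rewrite <- IHm by lia.
    pose proof (grid_le_1 k1 m Hk ltac:(lia)). pose proof (grid_le_1 k1 (S m) Hk Hm).
    assert (INR m * dx k1 <= INR (S m) * dx k1)
      by (apply Rmult_le_compat_r; [pose proof (dx_pos k1 Hk); lra|apply le_INR; lia]).
    symmetry. apply (@RInt_Chasles R_CompleteNormedModule); apply ex_RInt_sub with 0 1; lra || assumption. }
  rewrite <- (Hm k1), INR_mult_dx by lia. reflexivity.
Qed.

Section Bump.

Variable eta : R.
Hypothesis Heta : 0 < eta < 1/2.

(* Trapezoid on [[0, 1]] with plateau [[eta, 1 - eta]] of height [1 / (1 - eta)]. *)
Definition bump (u : R) : R := / (1 - eta) * Rmax 0 (Rmin 1 (Rmin (u / eta) ((1 - u) / eta))).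

Lemma bump_nonneg u : 0 <= bump u.
Proof. apply Rmult_le_pos; [left; apply Rinv_0_lt_compat; lra|apply Rmax_l]. Qed.

Lemma bump_out u : u <= 0 \/ 1 <= u -> bump u = 0.
Proof.
  intros Hu. unfold bump. rewrite Rmax_left; [ring|].
  assert (u / eta <= 0 \/ (1 - u) / eta <= 0) by
    (destruct Hu; [left|right]; apply Rmult_le_0_r; try lra; left; apply Rinv_0_lt_compat; lra).
  pose proof (Rmin_r 1 (Rmin (u / eta) ((1 - u) / eta))).
  pose proof (Rmin_l (u / eta) ((1 - u) / eta)). pose proof (Rmin_r (u / eta) ((1 - u) / eta)). lra.
Qed.

Lemma bump_plateau u : eta <= u <= 1 - eta -> bump u = / (1 - eta).
Proof.
  intros Hu. unfold bump. rewrite Rmin_left; [rewrite Rmax_right by lra; ring|].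
  apply Rmin_glb; apply (Rmult_le_reg_r eta); try lra; unfold Rdiv; rewrite Rmult_assoc, Rinv_l; lra.
Qed.

Lemma continuous_bump u : continuous bump u.
Proof.
  apply continuous_lipschitz with (/ (1 - eta) * (2 / eta)). intros x y. unfold bump.
  assert (Hmin : forall a b a' b', Rabs (Rmin a b - Rmin a' b') <= Rabs (a - a') + Rabs (b - b'))
    by (intros; unfold Rmin; destruct (Rle_dec a b), (Rle_dec a' b'); unfold Rabs;
        repeat destruct Rcase_abs; lra).
  assert (Hmax : forall a b, Rabs (Rmax 0 a - Rmax 0 b) <= Rabs (a - b))
    by (intros; unfold Rmax; destruct (Rle_dec 0 a), (Rle_dec 0 b); unfold Rabs;
        repeat destruct Rcase_abs; lra).
  rewrite <- Rmult_minus_distr_l, Rabs_mult, (Rabs_right (/ (1 - eta))), Rmult_assoc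
    by (left; apply Rinv_0_lt_compat; lra).
  apply Rmult_le_compat_l; [left; apply Rinv_0_lt_compat; lra|].
  eapply Rle_trans; [apply Hmax|]. eapply Rle_trans; [apply Hmin|].
  rewrite Rminus_eq_0, Rabs_R0, Rplus_0_l. eapply Rle_trans; [apply Hmin|].
  replace (x / eta - y / eta) with ((x - y) / eta) by (field; lra).
  replace ((1 - x) / eta - (1 - y) / eta) with (- ((x - y) / eta)) by (field; lra).
  rewrite Rabs_Ropp. unfold Rdiv. rewrite Rabs_mult, (Rabs_right (/ eta)) by (left; apply Rinv_0_lt_compat; lra).
  lra.
Qed.

Lemma is_RInt_bump : is_RInt bump 0 1 1.
Proof.
  set (h := / (1 - eta)).
  apply is_RInt_eq with ((h * eta / 2 + h * (1 - 2 * eta)) + h * eta / 2); [|unfold h; field; lra].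
  apply is_RInt_Chasles_R with (1 - eta); [apply is_RInt_Chasles_R with eta|].
  - apply is_RInt_ext_R with (fun u => h / eta * u).
    { rewrite Rmin_left, Rmax_right by lra. intros u Hu. unfold bump. fold h.
      assert (u / eta < 1) by (apply (Rmult_lt_reg_r eta); try lra; unfold Rdiv; rewrite Rmult_assoc, Rinv_l; lra).
      assert (u / eta <= (1 - u) / eta) by (apply Rmult_le_compat_r; [left; apply Rinv_0_lt_compat|]; lra).
      assert (0 <= u / eta) by (apply Rmult_le_pos; [lra|left; apply Rinv_0_lt_compat; lra]).
      rewrite (Rmin_left (u / eta)), (Rmin_right 1), Rmax_right by lra. field; lra. }
    apply is_RInt_eq with (minus (h / eta * eta ^ 2 / 2) (h / eta * 0 ^ 2 / 2));
      [|unfold minus, plus, opp; simpl; field; lra].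
    apply (is_RInt_derive (fun u => h / eta * u ^ 2 / 2)).
    + intros x _. auto_derive; [auto|field; lra].
    + intros x _. apply (continuous_mult (fun _ => h / eta) (fun u => u));
        [apply continuous_const|apply continuous_id].
  - apply is_RInt_ext_R with (fun u => h).
    { rewrite Rmin_left, Rmax_right by lra. intros u Hu. symmetry. apply bump_plateau; lra. }
    apply is_RInt_eq with ((1 - eta - eta) * h); [apply is_RInt_const_R|ring].
  - apply is_RInt_ext_R with (fun u => h / eta * (1 - u)).
    { rewrite Rmin_left, Rmax_right by lra. intros u Hu. unfold bump. fold h.
      assert ((1 - u) / eta < 1) by (apply (Rmult_lt_reg_r eta); try lra; unfold Rdiv; rewrite Rmult_assoc, Rinv_l; lra).
      assert ((1 - u) / eta <= u / eta) by (apply Rmult_le_compat_r; [left; apply Rinv_0_lt_compat|]; lra).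
      assert (0 <= (1 - u) / eta) by (apply Rmult_le_pos; [lra|left; apply Rinv_0_lt_compat; lra]).
      rewrite (Rmin_right (u / eta)), (Rmin_right 1), Rmax_right by lra. field; lra. }
    apply is_RInt_eq with (minus (- (h / eta * (1 - 1) ^ 2 / 2)) (- (h / eta * (1 - (1 - eta)) ^ 2 / 2)));
      [|unfold minus, plus, opp; simpl; field; lra].
    apply (is_RInt_derive (fun u => - (h / eta * (1 - u) ^ 2 / 2))).
    + intros x _. auto_derive; [auto|field; lra].
    + intros x _. apply continuous_lipschitz with (Rabs (h / eta)). intros a b.
      right. rewrite <- Rabs_mult, <- Rabs_Ropp. f_equal. ring.
Qed.

End Bump.

Section Speed.

Variables (eta : R) (k1 : nat).
Hypothesis Heta : 0 < eta < 1/2.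
Hypothesis Hk1 : (1 <= k1)%nat.

Definition slab_bump (l : nat) (c t : R) : R :=
  c / dx k1 * bump eta ((t - INR l * dx k1) / dx k1).

Definition speed (del : nat -> R) (t : R) : R := rsum k1 (fun l => slab_bump l (del l) t).

Lemma slab_bump_out l c t : t <= INR l * dx k1 \/ INR (S l) * dx k1 <= t -> slab_bump l c t = 0.
Proof.
  intros Ht. pose proof (dx_pos k1 Hk1). unfold slab_bump. rewrite bump_out; [ring|assumption|].
  rewrite S_INR in Ht. destruct Ht; [left|right];
    apply (Rmult_le_reg_r (dx k1)); auto; unfold Rdiv; rewrite Rmult_assoc, Rinv_l; lra.
Qed.

Lemma continuous_slab_bump l c t : continuous (slab_bump l c) t.
Proof.
  pose proof (dx_pos k1 Hk1). apply (continuous_mult (fun _ => c / dx k1)); [apply continuous_const|].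
  apply (continuous_comp (fun t => (t - INR l * dx k1) / dx k1) (bump eta)); [|apply continuous_bump; auto].
  apply continuous_lipschitz with (Rabs (/ dx k1)). intros a b.
  right. rewrite <- Rabs_mult. f_equal. unfold Rdiv. ring.
Qed.

Lemma continuous_speed del t : continuous (speed del) t.
Proof. apply continuous_rsum. intros; apply continuous_slab_bump. Qed.

Lemma speed_nonneg del t : (forall l, 0 <= del l) -> 0 <= speed del t.
Proof.
  intros Hd. apply rsum_nonneg. intros l _. pose proof (dx_pos k1 Hk1).
  apply Rmult_le_pos; [apply Rmult_le_pos; [auto|left; apply Rinv_0_lt_compat; lra]|apply bump_nonneg; auto].
Qed.

Lemma speed_on_slab del l t : (l < k1)%nat -> INR l * dx k1 < t < INR (S l) * dx k1 ->
  speed del t = slab_bump l (del l) t.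
Proof.
  intros Hl Ht. apply (rsum_single k1 (fun l => slab_bump l (del l) t) l Hl).
  intros l' Hl' Hne. apply slab_bump_out. rewrite !S_INR in *. pose proof (dx_pos k1 Hk1).
  destruct (Nat.lt_ge_cases l' l); [right|left];
    [assert (INR l' + 1 <= INR l) by (rewrite <- S_INR; apply le_INR; lia)
    |assert (INR l + 1 <= INR l') by (rewrite <- S_INR; apply le_INR; lia)]; nra.
Qed.

Lemma is_RInt_slab_bump_slab l c :
  is_RInt (slab_bump l c) (INR l * dx k1) (INR (S l) * dx k1) c.
Proof.
  pose proof (dx_pos k1 Hk1) as Hdx.
  set (u := / dx k1). set (v := - INR l).
  assert (H1 : is_RInt (bump eta) (u * (INR l * dx k1) + v) (u * (INR (S l) * dx k1) + v) 1).
  { replace (u * (INR l * dx k1) + v) with 0 by (unfold u, v; field; lra).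
    replace (u * (INR (S l) * dx k1) + v) with 1 by (unfold u, v; rewrite S_INR; field; lra).
    apply is_RInt_bump; auto. }
  apply (@is_RInt_comp_lin R_NormedModule) in H1.
  apply (@is_RInt_scal R_NormedModule) with (k := c) in H1.
  apply is_RInt_eq with (c * 1); [|ring].
  apply is_RInt_ext_R with (2 := H1). intros x _.
  unfold slab_bump, scal; simpl; unfold mult; simpl. unfold u, v, Rdiv.
  replace (/ dx k1 * x + - INR l) with ((x - INR l * dx k1) * / dx k1) by (field; lra). ring.
Qed.

Lemma is_RInt_slab_bump l m c :
  is_RInt (slab_bump l c) 0 (INR m * dx k1) (if Nat.ltb l m then c else 0).
Proof.
  pose proof (dx_pos k1 Hk1) as Hdx.
  assert (Hl0 : 0 <= INR l * dx k1) by (apply Rmult_le_pos; [apply pos_INR|lra]).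
  assert (Hm0 : 0 <= INR m * dx k1) by (apply Rmult_le_pos; [apply pos_INR|lra]).
  assert (Hzero : forall a b, is_RInt (fun _ => 0) a b 0)
    by (intros; apply is_RInt_eq with ((b - a) * 0); [apply is_RInt_const_R|ring]).
  destruct (Nat.ltb_spec l m).
  - assert (INR (S l) * dx k1 <= INR m * dx k1) by (apply Rmult_le_compat_r; [lra|apply le_INR; lia]).
    apply is_RInt_eq with ((0 + c) + 0); [|ring].
    apply is_RInt_Chasles_R with (INR (S l) * dx k1); [apply is_RInt_Chasles_R with (INR l * dx k1)|].
    + apply is_RInt_ext_R with (2 := Hzero _ _).
      intros x Hx. symmetry. apply slab_bump_out. rewrite Rmax_right in Hx; lra.
    + apply is_RInt_slab_bump_slab.
    + apply is_RInt_ext_R with (2 := Hzero _ _).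
      intros x Hx. symmetry. apply slab_bump_out. rewrite Rmin_left in Hx; lra.
  - assert (INR m * dx k1 <= INR l * dx k1) by (apply Rmult_le_compat_r; [lra|apply le_INR; lia]).
    apply is_RInt_ext_R with (2 := Hzero _ _).
    intros x Hx. symmetry. apply slab_bump_out. rewrite Rmax_right in Hx; lra.
Qed.

Lemma is_RInt_speed del m : (m <= k1)%nat -> is_RInt (speed del) 0 (INR m * dx k1) (rsum m del).
Proof.
  intros Hm. rewrite <- (rsum_truncate k1 m del Hm).
  apply (is_RInt_rsum k1 (fun l => slab_bump l (del l))). intros l _. apply is_RInt_slab_bump.
Qed.

End Speed.

Section Curve.

Variables (d : nat) (eta : R) (k1 : nat) (D : nat -> nat -> R).
Hypothesis Heta : 0 < eta < 1/2.
Hypothesis Hk1 : (1 <= k1)%nat.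
Hypothesis HD : forall j i, 0 <= D j i.

(* The first [d - 1] coordinates advance by [D j i] across the [j]-th slab; the last one is time. *)
Definition curve (t : R) : vec :=
  fun i => if Nat.ltb i (d - 1) then RInt (speed eta k1 (fun l => D (S l) i)) 0 t else t.

Definition velocity (t : R) : vec :=
  fun i => if Nat.ltb i (d - 1) then speed eta k1 (fun l => D (S l) i) t else 1.

Lemma curve_admissible : (1 <= d)%nat -> admissible d curve velocity.
Proof.
  intros Hd. split.
  - intros i Hi t Ht. unfold curve, velocity. destruct (Nat.ltb_spec i (d - 1)).
    + split; [apply filterlim_within_derive|apply filterlim_within_continuous, continuous_speed; auto].
      apply is_derive_RInt_0. intros; apply continuous_speed; auto.
    + split; [apply filterlim_within_derive with (F := fun s => s); apply (is_derive_id t)|].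
      apply filterlim_within_continuous with (F := fun _ => 1), continuous_const.
  - intros t Ht. split.
    + intros i Hi. unfold velocity. destruct (Nat.ltb_spec i (d - 1)); [apply speed_nonneg; auto|lra].
    + exists (d - 1)%nat. split; [lia|]. unfold velocity. rewrite Nat.ltb_irrefl. lra.
Qed.

Lemma curve_le i s t : s <= t -> curve s i <= curve t i.
Proof.
  intros Hst. unfold curve. destruct (Nat.ltb i (d - 1)); [|assumption].
  apply RInt_ge_0_le; [intros; apply continuous_speed|intros; apply speed_nonneg|]; auto.
Qed.

Lemma curve_nonneg i t : 0 <= t -> 0 <= curve t i.
Proof.
  intros Ht. apply Rle_trans with (curve 0 i); [|apply curve_le; assumption].
  unfold curve. destruct (Nat.ltb i (d - 1)); [rewrite RInt_point; right; reflexivity|lra].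
Qed.

Lemma curve_grid i m : (i < d - 1)%nat -> (m <= k1)%nat ->
  curve (INR m * dx k1) i = rsum m (fun l => D (S l) i).
Proof.
  intros Hi Hm. unfold curve. destruct (Nat.ltb_spec i (d - 1)); [|lia].
  apply is_RInt_unique, is_RInt_speed; assumption.
Qed.

End Curve.

(** * Grid cells of a piecewise constant function *)

Definition floor_nat (x : R) : nat := Z.to_nat (Zfloor x).

Lemma floor_nat_bound x : 0 <= x -> INR (floor_nat x) <= x < INR (floor_nat x) + 1.
Proof.
  intros Hx. unfold floor_nat. assert (H0 : (0 <= Zfloor x)%Z) by (apply Zfloor_lub; simpl; lra).
  rewrite INR_IZR_INZ, Z2Nat.id by assumption. apply Zfloor_bound.
Qed.

Lemma floor_nat_le x y : x <= y -> (floor_nat x <= floor_nat y)%nat.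
Proof. intros H. unfold floor_nat. pose proof (Zfloor_le x y H). lia. Qed.

(* The centre of [Q_{L,alpha}] for [alpha = k + 1]. *)
Definition cell_center (L : nat) (k : nat -> nat) : vec := fun i => (INR (k i) + /2) / INR L.

Lemma bounded_on_nat_box L n (F : (nat -> nat) -> R) :
  (forall k k', (forall i, (i < n)%nat -> k i = k' i) -> F k = F k') ->
  exists M, forall k, (forall i, (i < n)%nat -> (k i < L)%nat) -> F k <= M.
Proof.
  revert F. induction n as [|n IH]; intros F HF.
  - exists (F (fun _ => O)). intros k _. right. apply HF. intros; lia.
  - set (Fv := fun v k => F (fun i => if Nat.eqb i n then v else k i)).
    assert (Hv : forall v, exists M, forall k, (forall i, (i < n)%nat -> (k i < L)%nat) -> Fv v k <= M).
    { intros v. apply IH. intros k k' H. apply HF. intros i Hi.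
      destruct (Nat.eqb_spec i n); [reflexivity|apply H; lia]. }
    assert (Hmax : forall N, exists M, forall v k, (v < N)%nat ->
      (forall i, (i < n)%nat -> (k i < L)%nat) -> Fv v k <= M).
    { induction N as [|N [M HM]]; [exists 0; intros; lia|].
      destruct (Hv N) as [M' HM']. exists (Rmax M M'). intros v k Hvl Hk.
      destruct (Nat.eq_dec v N) as [->|]; [eapply Rle_trans; [apply HM'|apply Rmax_r]; assumption|].
      eapply Rle_trans; [apply HM; [lia|assumption]|apply Rmax_l]. }
    destruct (Hmax L) as [M HM]. exists M. intros k Hk.
    rewrite (HF k (fun i => if Nat.eqb i n then k n else k i)).
    + apply HM; [apply Hk; lia|intros; apply Hk; lia].
    + intros i Hi. destruct (Nat.eqb_spec i n); subst; reflexivity.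
Qed.

Lemma Rabs_le_Linf_norm d (f : vec -> R) M : (forall x, in_open_cube d x -> Rabs (f x) <= M) ->
  forall x, in_open_cube d x -> Rabs (f x) <= Linf_norm d f.
Proof.
  intros HM x Hx. unfold Linf_norm.
  set (E := fun y => exists x, in_open_cube d x /\ y = Rabs (f x)).
  destruct (Lub_Rbar_correct E) as [Hub Hlub].
  assert (A : Rbar_le (Rabs (f x)) (Lub_Rbar E)) by (apply Hub; exists x; split; trivial).
  assert (B : Rbar_le (Lub_Rbar E) M) by (apply Hlub; intros y [z [Hz ->]]; apply HM; assumption).
  destruct (Lub_Rbar E); simpl in *; tauto.
Qed.

Lemma Linf_norm_nonneg d (f : vec -> R) M : (forall x, in_open_cube d x -> Rabs (f x) <= M) ->
  0 <= Linf_norm d f.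
Proof.
  intros HM. apply Rle_trans with (Rabs (f (fun _ => /2))); [apply Rabs_pos|].
  apply (Rabs_le_Linf_norm d f M HM). intros i _. lra.
Qed.

Section Cells.

Variables (d L : nat) (f : vec -> R).
Hypothesis HL : (1 <= L)%nat.
Hypothesis Hpc : piecewise_const d L f.
Hypothesis Hout : forall x, ~ in_cube d x -> f x = 0.

Lemma Qcell_cell_center alpha : multiindex d L alpha ->
  let c := cell_center L (fun i => pred (alpha i)) in Qcell d L alpha c /\ in_open_cube d c.
Proof.
  intros Ha c. assert (HL' : 0 < INR L) by (apply lt_0_INR; lia).
  assert (Hc : forall i, (i < d)%nat -> INR L * c i = INR (alpha i) - /2).
  { intros i Hi. specialize (Ha i Hi). unfold c, cell_center.
    replace (INR (alpha i)) with (INR (pred (alpha i)) + 1) by (rewrite <- S_INR; f_equal; lia).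
    field. lra. }
  assert (Hoc : in_open_cube d c).
  { intros i Hi. specialize (Hc i Hi). specialize (Ha i Hi).
    assert (1 <= INR (alpha i) <= INR L) by (split; [apply (le_INR 1)|apply le_INR]; lia).
    split; apply (Rmult_lt_reg_l (INR L)); nra. }
  split; [split; [intros i Hi; specialize (Hoc i Hi); lra|]|assumption].
  intros i Hi. rewrite Hc by assumption. lra.
Qed.

Lemma in_cube_cell_center k : in_cube d (cell_center L k) -> forall i, (i < d)%nat -> (k i < L)%nat.
Proof.
  intros Hc i Hi. destruct (Nat.lt_ge_cases (k i) L) as [|Hge]; [assumption|].
  exfalso. destruct (Hc i Hi) as [_ H]. unfold cell_center in H. apply le_INR in Hge.
  assert (HL' : 0 < INR L) by (apply lt_0_INR; lia).
  apply (Rmult_lt_compat_l (INR L)) in H; [|lra]. field_simplify in H; lra.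
Qed.

Lemma f_cell_center_ext k k' : (forall i, (i < d)%nat -> k i = k' i) ->
  f (cell_center L k) = f (cell_center L k').
Proof.
  intros Hkk. destruct (classic (in_cube d (cell_center L k))) as [Hin|Hin].
  - pose proof (in_cube_cell_center k Hin) as Hk.
    assert (Ha : multiindex d L (fun i => S (k i))) by (intros i Hi; specialize (Hk i Hi); lia).
    destruct (Qcell_cell_center _ Ha) as [[Hc1 Hc2] _]. apply (Hpc _ Ha); [split; assumption|].
    split.
    + intros i Hi. unfold cell_center. rewrite <- (Hkk i Hi). apply Hc1; assumption.
    + intros i Hi. unfold cell_center. rewrite <- (Hkk i Hi). apply Hc2; assumption.
  - rewrite !Hout; [reflexivity| |assumption].
    intros Hin'. apply Hin. intros i Hi. unfold cell_center. rewrite (Hkk i Hi). apply Hin'; assumption.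
Qed.

Lemma cell_center_floor_in_cube x : (forall i, (i < d)%nat -> 0 <= x i) ->
  in_cube d (cell_center L (fun i => floor_nat (INR L * x i))) <-> in_cube d x.
Proof.
  intros Hx. assert (HL' : 0 < INR L) by (apply lt_0_INR; lia).
  assert (Hk : forall i, (i < d)%nat ->
    INR (floor_nat (INR L * x i)) <= INR L * x i < INR (floor_nat (INR L * x i)) + 1)
    by (intros i Hi; apply floor_nat_bound; specialize (Hx i Hi); nra).
  split.
  - intros Hin i Hi. specialize (Hk i Hi).
    assert (INR (S (floor_nat (INR L * x i))) <= INR L)
      by (apply le_INR, (in_cube_cell_center (fun i => floor_nat (INR L * x i))); assumption).
    rewrite S_INR in *. split; [apply Hx; assumption|]. apply (Rmult_lt_reg_l (INR L)); lra.
  - intros Hxc i Hi. specialize (Hk i Hi). destruct (Hxc i Hi) as [H0 H1].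
    unfold cell_center. set (k := floor_nat (INR L * x i)) in *.
    assert (HkL : INR k + 1 <= INR L).
    { rewrite <- S_INR. apply le_INR, INR_lt. apply Rle_lt_trans with (INR L * x i); nra. }
    split; [apply Rdiv_le_0_compat; [pose proof (pos_INR k)|]; lra|].
    apply (Rmult_lt_reg_l (INR L)); [lra|]. field_simplify; lra.
Qed.

Lemma f_eq_cell_center x : (forall i, (i < d)%nat -> 0 <= x i) ->
  f x = f (cell_center L (fun i => floor_nat (INR L * x i))).
Proof.
  intros Hx. assert (HL' : 0 < INR L) by (apply lt_0_INR; lia).
  pose proof (cell_center_floor_in_cube x Hx) as Hiff.
  set (k := fun i => floor_nat (INR L * x i)) in *.
  destruct (classic (in_cube d x)) as [Hin|Hin]; [|rewrite !Hout; [reflexivity|tauto|assumption]].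
  pose proof (in_cube_cell_center k (proj2 Hiff Hin)) as HkL.
  assert (Ha : multiindex d L (fun i => S (k i))) by (intros i Hi; specialize (HkL i Hi); lia).
  destruct (Qcell_cell_center _ Ha) as [Hc _]. apply (Hpc _ Ha); [|exact Hc].
  split; [assumption|]. intros i Hi. rewrite S_INR.
  assert (INR (k i) <= INR L * x i < INR (k i) + 1)
    by (apply floor_nat_bound; specialize (Hx i Hi); nra). lra.
Qed.

Lemma f_bounded_open_cube : exists M, forall x, in_open_cube d x -> Rabs (f x) <= M.
Proof.
  destruct (bounded_on_nat_box L d (fun k => Rabs (f (cell_center L k)))) as [M HM].
  { intros k k' H. rewrite (f_cell_center_ext k k' H). reflexivity. }
  exists M. intros x Hx.
  assert (Hx0 : forall i, (i < d)%nat -> 0 <= x i) by (intros i Hi; left; apply Hx; assumption).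
  rewrite f_eq_cell_center by assumption. apply HM, in_cube_cell_center.
  apply cell_center_floor_in_cube; [assumption|]. intros i Hi. specialize (Hx i Hi). lra.
Qed.

End Cells.

(** * The boxes [R_{b,j}] and the staircase *)

Section Boxes.

Variables (d k1 k2 : nat) (b : nat -> nat -> nat).

Definition box_lo (j i : nat) : R :=
  zpt d k1 k2 b (j - 1) i - (if Nat.ltb i (d - 1) then dy k1 k2 else 0).

Definition box_side (j i : nat) (t : R) : R :=
  indic ((0 <= t < 1) /\ box_lo j i <= t < zpt d k1 k2 b j i).

Lemma box_side_int j i :
  ex_RInt (box_side j i) 0 1 /\ 0 <= RInt (box_side j i) 0 1 <= Rmax 0 (zpt d k1 k2 b j i - box_lo j i).
Proof.
  destruct (is_RInt_indic_interval (box_lo j i) (zpt d k1 k2 b j i)) as [I [HI HB]].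
  unfold box_side. rewrite (is_RInt_unique _ _ _ _ HI). split; [eexists; exact HI|exact HB].
Qed.

Lemma pbj_const f j c : (forall x, Rbox d k1 k2 b j x -> f x = c) ->
  pbj d k1 k2 f b j = c * prodn d (fun i => RInt (box_side j i) 0 1).
Proof.
  intros Hc. unfold pbj, cube_integral.
  replace (fun x => indic (Rbox d k1 k2 b j x) * f x)
    with (fun x : vec => c * prodn d (fun i => box_side j i (x i))).
  - rewrite iint_prodn; [|intros; apply box_side_int|lia].
    f_equal. apply prodn_ext. intros i Hi. destruct (Nat.ltb_spec i d); [reflexivity|lia].
  - apply functional_extensionality. intros x. unfold box_side.
    rewrite <- (indic_forall d (fun i => (0 <= x i < 1) /\ box_lo j i <= x i < zpt d k1 k2 b j i)).
    destruct (classic (Rbox d k1 k2 b j x)) as [[H1 H2]|H].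
    + rewrite !indic_true, Hc; try ring; try (split; assumption).
      intros i Hi. split; [apply H1|apply H2]; assumption.
    + rewrite !indic_false; [ring|assumption|].
      intros H'. apply H. split; intros i Hi; apply H'; assumption.
Qed.

Lemma pbj_empty f j i : (1 <= j)%nat -> (i < d - 1)%nat -> b j i = 0%nat -> pbj d k1 k2 f b j = 0.
Proof.
  intros Hj Hi Hb. unfold pbj, cube_integral.
  replace (fun x => indic (Rbox d k1 k2 b j x) * f x) with (fun _ : vec => 0) by
    (apply functional_extensionality; intros x; rewrite indic_false; [ring|];
     intros [H1 H2]; destruct (H1 i ltac:(lia)) as [A _]; destruct (H2 i ltac:(lia)) as [_ B];
     unfold zpt in B; destruct j; [lia|]; rewrite (proj2 (Nat.ltb_lt i (d - 1))), Hb in B by assumption;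
     simpl in B; lra).
  apply iint_zero.
Qed.

End Boxes.

Section Staircase.

Variables (d k1 k2 : nat) (b : nat -> nat -> nat).
Hypothesis Hk1 : (1 <= k1)%nat.
Hypothesis Hk2 : (1 <= k2)%nat.
Hypothesis Hb : in_Phi d k1 k2 b.

(* Height of the curve at time [j dx]: half a [dy]-cell below the corner [z_{b,j}], so that
   between two such times the curve stays inside [R_{b,j}]. *)
Definition stair_height (j i : nat) : R :=
  if Nat.eqb j 0 then 0 else Rmax 0 (INR (b j i) - /2) * dy k1 k2.

Definition stair_step (j i : nat) : R := Rmax 0 (stair_height j i - stair_height (j - 1) i).

Lemma stair_height_nonneg j i : 0 <= stair_height j i.
Proof.
  unfold stair_height. destruct (Nat.eqb j 0); [lra|].
  apply Rmult_le_pos; [apply Rmax_l|left; apply dy_pos; assumption].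
Qed.

Lemma stair_height_lt_1 j i : (1 <= j <= k1)%nat -> (i < d - 1)%nat -> stair_height j i < 1.
Proof.
  intros Hj Hi. unfold stair_height. destruct (Nat.eqb_spec j 0); [lra|].
  pose proof (dy_pos k1 k2 Hk1 Hk2). pose proof (INR_mult_dy k1 k2 Hk1 Hk2).
  assert (INR (b j i) <= INR (k1 * k2)) by (apply le_INR, (proj2 Hb); assumption).
  unfold Rmax. destruct Rle_dec; nra.
Qed.

Lemma stair_height_le_S m i : (m < k1)%nat -> (i < d - 1)%nat ->
  stair_height m i <= stair_height (S m) i.
Proof.
  intros Hm Hi. pose proof (dy_pos k1 k2 Hk1 Hk2). unfold stair_height.
  destruct (Nat.eqb_spec m 0); [apply Rmult_le_pos; [apply Rmax_l|lra]|]. simpl.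
  apply Rmult_le_compat_r; [lra|]. apply Rle_max_compat_l.
  assert (INR (b m i) <= INR (b (S m) i)) by (apply le_INR, (proj1 Hb); lia). lra.
Qed.

Lemma stair_step_nonneg j i : 0 <= stair_step j i.
Proof. apply Rmax_l. Qed.

Lemma stair_step_le_1 j i : (1 <= j <= k1)%nat -> (i < d - 1)%nat -> stair_step j i <= 1.
Proof.
  intros Hj Hi. apply Rmax_lub; [lra|].
  pose proof (stair_height_lt_1 j i Hj Hi). pose proof (stair_height_nonneg (j - 1) i). lra.
Qed.

Lemma rsum_stair_step m i : (m <= k1)%nat -> (i < d - 1)%nat ->
  rsum m (fun l => stair_step (S l) i) = stair_height m i.
Proof.
  induction m; intros Hm Hi; [reflexivity|]. simpl. rewrite IHm by lia.
  unfold stair_step. replace (S m - 1)%nat with m by lia.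
  pose proof (stair_height_le_S m i ltac:(lia) Hi). rewrite Rmax_right; lra.
Qed.

Definition box_bound (l i : nat) : R :=
  if Nat.ltb i (d - 1) then stair_step (S l) i + 2 * dy k1 k2 else dx k1.

Lemma box_side_le l i : (l < k1)%nat -> (i < d)%nat ->
  (forall i, (i < d - 1)%nat -> (1 <= b (S l) i)%nat) ->
  RInt (box_side d k1 k2 b (S l) i) 0 1 <= box_bound l i.
Proof.
  intros Hl Hi Hb1. pose proof (dy_pos k1 k2 Hk1 Hk2). pose proof (dx_pos k1 Hk1).
  destruct (box_side_int d k1 k2 b (S l) i) as [_ [_ Hle]]. eapply Rle_trans; [exact Hle|].
  unfold box_bound, box_lo, zpt. replace (S l - 1)%nat with l by lia. apply Rmax_lub.
  { destruct (Nat.ltb i (d - 1)); [pose proof (stair_step_nonneg (S l) i)|]; lra. }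
  destruct (Nat.ltb_spec i (d - 1)) as [Hi'|Hi'].
  - assert (Hstep : stair_height (S l) i - stair_height l i <= stair_step (S l) i)
      by (unfold stair_step; replace (S l - 1)%nat with l by lia; apply Rmax_r).
    assert (1 <= INR (b (S l) i)) by (apply (le_INR 1), Hb1; assumption).
    unfold stair_height in Hstep. simpl in Hstep. rewrite Rmax_right in Hstep by lra.
    destruct l as [|l']; simpl in Hstep |- *; [lra|].
    assert (Rmax 0 (INR (b (S l') i) - / 2) <= INR (b (S l') i) + / 2)
      by (apply Rmax_lub; pose proof (pos_INR (b (S l') i)); lra). nra.
  - destruct l as [|l']; [simpl; lra|]. rewrite (S_INR (S l')). lra.
Qed.

Variable eta : R.
Hypothesis Heta : 0 < eta < 1/2.

Notation gamma := (curve d eta k1 stair_step).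

Lemma curve_stair m i : (m <= k1)%nat -> (i < d - 1)%nat -> gamma (INR m * dx k1) i = stair_height m i.
Proof.
  intros Hm Hi. rewrite curve_grid by (auto using stair_step_nonneg). apply rsum_stair_step; assumption.
Qed.

Lemma curve_in_box l t : (l < k1)%nat -> (forall i, (i < d - 1)%nat -> (1 <= b (S l) i)%nat) ->
  INR l * dx k1 < t < INR (S l) * dx k1 -> Rbox d k1 k2 b (S l) (gamma t).
Proof.
  intros Hl Hb1 Ht.
  pose proof (dx_pos k1 Hk1) as Hdx. pose proof (dy_pos k1 k2 Hk1 Hk2) as Hdy.
  pose proof (grid_le_1 k1 (S l) Hk1 Hl) as Hgrid. pose proof (grid_le_1 k1 l Hk1 ltac:(lia)) as Hgrid0.
  assert (Hlo : forall i, (i < d - 1)%nat -> stair_height l i <= gamma t i).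
  { intros i Hi. rewrite <- (curve_stair l i) by (lia || assumption).
    apply curve_le; auto using stair_step_nonneg; lra. }
  assert (Hup : forall i, (i < d - 1)%nat -> gamma t i <= stair_height (S l) i).
  { intros i Hi. rewrite <- (curve_stair (S l) i) by (lia || assumption).
    apply curve_le; auto using stair_step_nonneg; lra. }
  assert (Hlast : forall i, (d - 1 <= i)%nat -> gamma t i = t)
    by (intros i Hi; unfold curve; rewrite (proj2 (Nat.ltb_ge i (d - 1))) by assumption; reflexivity).
  split.
  - intros i Hi. destruct (Nat.ltb_spec i (d - 1)) as [Hi'|Hi']; [|rewrite Hlast by assumption; lra].
    pose proof (stair_height_nonneg l i). pose proof (stair_height_lt_1 (S l) i ltac:(lia) Hi').
    specialize (Hlo i Hi'). specialize (Hup i Hi'). lra.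
  - intros i Hi. replace (S l - 1)%nat with l by lia. unfold zpt.
    destruct (Nat.ltb_spec i (d - 1)) as [Hi'|Hi'].
    + specialize (Hlo i Hi'). specialize (Hup i Hi').
      assert (1 <= INR (b (S l) i)) by (apply (le_INR 1), Hb1; assumption).
      unfold stair_height in Hlo, Hup. simpl in Hup. rewrite Rmax_right in Hup by lra.
      split; [|nra]. destruct l as [|l']; [simpl in *; lra|].
      simpl in Hlo.
      assert (INR (b (S l') i) - 1 <= Rmax 0 (INR (b (S l') i) - / 2))
        by (eapply Rle_trans; [|apply Rmax_r]; lra). nra.
    + rewrite Hlast by assumption. destruct l as [|l']; [simpl in Ht |- *; lra|].
      lra.
Qed.

End Staircase.

(** * The estimate on one slab *)

Definition J_integrand (d : nat) (f : vec -> R) (gamma g : R -> vec) (t : R) : R :=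
  droot d (f (gamma t)) * droot d (prodn d (g t)).

Lemma J_integrand_nonneg d f gamma g t : 0 <= J_integrand d f gamma g t.
Proof. apply Rmult_le_pos; apply droot_nonneg. Qed.

(* Dominates [2 (d - 1) 3^(d - 1)], the constant of [prodn_sub_le] for sides enlarged by [2 dy]. *)
Definition Kbox (d : nat) : R := 2 * INR d * 3 ^ d.

Lemma Kbox_pos d : (1 <= d)%nat -> 0 < Kbox d.
Proof.
  intros. unfold Kbox. apply Rmult_lt_0_compat; [|apply pow_lt; lra].
  apply Rmult_lt_0_compat; [lra|apply lt_0_INR; lia].
Qed.

Section SlabEstimate.

Variables (d L : nat) (f : vec -> R) (k1 k2 : nat) (b : nat -> nat -> nat) (eta : R).
Hypothesis Hd : (1 <= d)%nat.
Hypothesis HL : (1 <= L)%nat.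
Hypothesis Hpc : piecewise_const d L f.
Hypothesis Hout : forall x, ~ in_cube d x -> f x = 0.
Hypothesis Hpos : forall x, 0 <= f x.
Hypothesis Hk1 : (1 <= k1)%nat.
Hypothesis Hk2 : (1 <= k2)%nat.
Hypothesis Hb : in_Phi d k1 k2 b.
Hypothesis Heta : 0 < eta < 1/2.

Notation D := (stair_step k1 k2 b).
Notation gamma := (curve d eta k1 D).
Notation gamma' := (velocity d eta k1 D).
Notation F := (J_integrand d f gamma gamma').

Lemma Linf_norm_f_nonneg : 0 <= Linf_norm d f.
Proof. destruct (f_bounded_open_cube d L f HL Hpc Hout) as [M HM]. apply (Linf_norm_nonneg d f M HM). Qed.

Lemma inH_value j : inH d L k1 k2 b j ->
  exists c, 0 <= c <= Linf_norm d f /\ forall x, Rbox d k1 k2 b j x -> f x = c.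
Proof.
  intros [alpha [Ha Hsub]]. destruct (Qcell_cell_center d L HL alpha Ha) as [Hc Hoc].
  set (xa := cell_center L (fun i => pred (alpha i))) in *.
  exists (f xa). split; [split; [apply Hpos|]|].
  - destruct (f_bounded_open_cube d L f HL Hpc Hout) as [M HM].
    eapply Rle_trans; [apply Rle_abs|]. apply (Rabs_le_Linf_norm d f M HM xa Hoc).
  - intros x Hx. apply (Hpc alpha Ha); [apply Hsub|]; assumption.
Qed.

(* Along the monotone curve, [f] only sees the grid cell of [gamma t], a nondecreasing index. *)
Lemma ex_RInt_J_integrand : ex_RInt F 0 1.
Proof.
  apply ex_RInt_ext_le with
    (fun t => droot d (f (cell_center L (fun i => floor_nat (INR L * gamma t i))))
              * droot d (prodn d (gamma' t)));
    [lra| |].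
  - intros t Ht. unfold J_integrand. rewrite <- (f_eq_cell_center d L f); auto.
    intros i Hi. apply curve_nonneg; auto using stair_step_nonneg; lra.
  - apply (ex_RInt_step_mult d (fun k => droot d (f (cell_center L k)))).
    + intros k k' H. f_equal. apply (f_cell_center_ext d L f); auto.
    + intros t. apply (continuous_comp (fun t => prodn d (gamma' t)) (droot d));
        [|apply continuous_droot; assumption].
      apply continuous_prodn. intros i Hi. unfold velocity.
      destruct (Nat.ltb i (d - 1)); [apply continuous_speed; auto|apply continuous_const].
    + lra.
    + intros i s t Hi H1 H2 H3. apply floor_nat_le, Rmult_le_compat_l; [apply pos_INR|].
      apply curve_le; auto using stair_step_nonneg.
Qed.

Definition stair_box (l i : nat) : R := if Nat.ltb i (d - 1) then D (S l) i else dx k1.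

Lemma stair_box_bounds l i : (l < k1)%nat -> (i < d)%nat -> 0 <= stair_box l i <= 1.
Proof.
  intros Hl Hi. unfold stair_box. destruct (Nat.ltb_spec i (d - 1)).
  - split; [apply stair_step_nonneg|apply (stair_step_le_1 d); auto; lia].
  - pose proof (dx_pos k1 Hk1). pose proof (dx_le_1 k1 Hk1). lra.
Qed.

Section Slab.

Variables (l : nat) (c : R).
Hypothesis Hl : (l < k1)%nat.
Hypothesis Hb1 : forall i, (i < d - 1)%nat -> (1 <= b (S l) i)%nat.
Hypothesis Hc0 : 0 <= c.
Hypothesis Hc : forall x, Rbox d k1 k2 b (S l) x -> f x = c.

(* On the plateau of the bumps the curve moves at least at speed [D / dx] inside a box where [f = c]. *)
Lemma slab_integral_ge :
  (1 - 2 * eta) * droot d (c * prodn d (stair_box l)) <= RInt F (INR l * dx k1) (INR (S l) * dx k1).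
Proof.
  pose proof (dx_pos k1 Hk1) as Hdx.
  pose proof (grid_le_1 k1 l Hk1 ltac:(lia)). pose proof (grid_le_1 k1 (S l) Hk1 Hl).
  set (a := INR l * dx k1) in *. set (a' := INR (S l) * dx k1) in *.
  assert (Ha' : a' - a = dx k1) by (unfold a, a'; rewrite S_INR; ring).
  set (W := prodn d (fun i => if Nat.ltb i (d - 1) then D (S l) i / dx k1 else 1)).
  assert (HW0 : 0 <= W).
  { apply prodn_nonneg. intros i Hi. destruct (Nat.ltb i (d - 1)); [|lra].
    apply Rmult_le_pos; [apply stair_step_nonneg|left; apply Rinv_0_lt_compat; lra]. }
  replace (prodn d (stair_box l)) with (W * dx k1 ^ d).
  2:{ unfold W. rewrite <- prodn_scal. apply prodn_ext. intros i Hi. unfold stair_box.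
      destruct (Nat.ltb i (d - 1)); [field; lra|ring]. }
  assert (Hdxd : 0 <= dx k1 ^ d) by (apply pow_le; lra).
  replace (droot d (c * (W * dx k1 ^ d))) with ((a' - a) * (droot d c * droot d W)).
  2:{ rewrite Ha', droot_mult, (droot_mult d Hd W), droot_of_pow; try ring; try assumption; try lra.
      apply Rmult_le_pos; assumption. }
  rewrite <- Rmult_assoc.
  apply RInt_ge_plateau; [lra|assumption|apply ex_RInt_sub with 0 1; lra || apply ex_RInt_J_integrand|
                          intros; apply J_integrand_nonneg|].
  intros t Ht. assert (Hta : a < t < a') by nra.
  unfold J_integrand. rewrite (Hc _ (curve_in_box d k1 k2 b Hk1 Hk2 Hb eta Heta l t Hl Hb1 Hta)).
  apply Rmult_le_compat_l; [apply droot_nonneg|]. apply droot_le; [assumption|].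
  unfold W. apply prodn_le. intros i Hi. unfold velocity. destruct (Nat.ltb_spec i (d - 1)); [|lra].
  rewrite speed_on_slab with (l := l) by assumption. unfold slab_bump. rewrite bump_plateau.
  - assert (0 <= D (S l) i / dx k1)
      by (apply Rmult_le_pos; [apply stair_step_nonneg|left; apply Rinv_0_lt_compat; lra]).
    assert (1 <= / (1 - eta)) by (rewrite <- Rinv_1; apply Rinv_le_contravar; lra). nra.
  - assumption.
  - fold a. split; apply (Rmult_le_reg_r (dx k1)); auto; unfold Rdiv; rewrite Rmult_assoc, Rinv_l; nra.
Qed.

Lemma droot_pbj_le :
  droot d (pbj d k1 k2 f b (S l)) <=
  droot d (c * prodn d (stair_box l)) + droot d (c * (Kbox d * dx k1 * dy k1 k2)).
Proof.
  pose proof (dx_pos k1 Hk1). pose proof (dy_pos k1 k2 Hk1 Hk2). pose proof (dy_le_1 k1 k2 Hk1 Hk2).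
  set (y := box_bound d k1 k2 b l).
  assert (Hxy : forall i, (i < d)%nat ->
    0 <= stair_box l i <= y i /\ y i <= 3 /\ y i - stair_box l i <= 2 * dy k1 k2).
  { intros i Hi. pose proof (stair_box_bounds l i Hl Hi). unfold y, box_bound, stair_box in *.
    destruct (Nat.ltb i (d - 1)); lra. }
  assert (Hdiff : prodn d y - prodn d (stair_box l) <= Kbox d * dx k1 * dy k1 k2).
  { replace d with (S (d - 1)) at 1 2 by lia. cbn [prodn].
    unfold y at 2, stair_box at 2, box_bound. rewrite Nat.ltb_irrefl.
    pose proof (prodn_sub_le (d - 1) (stair_box l) y (2 * dy k1 k2) ltac:(lra)
                  (fun i Hi => Hxy i ltac:(lia))).
    assert (INR (d - 1) * 3 ^ (d - 1) <= INR d * 3 ^ d).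
    { apply Rmult_le_compat; [apply pos_INR|apply pow_le; lra|apply le_INR; lia|apply Rle_pow; [lra|lia]]. }
    assert (prodn (d - 1) y - prodn (d - 1) (stair_box l) <= Kbox d * dy k1 k2) by (unfold Kbox; nra).
    replace (Kbox d * dx k1 * dy k1 k2) with (Kbox d * dy k1 k2 * dx k1) by ring.
    rewrite <- Rmult_minus_distr_r. apply Rmult_le_compat_r; lra. }
  assert (Hx0 : 0 <= prodn d (stair_box l)) by (apply prodn_nonneg; intros; apply stair_box_bounds; lia).
  assert (Hp : pbj d k1 k2 f b (S l) <= c * prodn d y).
  { rewrite (pbj_const d k1 k2 b f (S l) c Hc). apply Rmult_le_compat_l; [assumption|].
    apply prodn_le. intros i Hi. split; [apply box_side_int|apply box_side_le]; assumption. }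
  apply Rle_trans with (droot d (c * prodn d y)); [apply droot_le; assumption|].
  replace (c * prodn d y) with (c * prodn d (stair_box l) + c * (prodn d y - prodn d (stair_box l))) by ring.
  assert (prodn d (stair_box l) <= prodn d y) by (apply prodn_le; intros i Hi; apply Hxy; assumption).
  eapply Rle_trans; [apply (droot_add_le d Hd); apply Rmult_le_pos; lra|].
  apply Rplus_le_compat_l, droot_le; [assumption|]. apply Rmult_le_compat_l; assumption.
Qed.

End Slab.

Lemma slab_bound l : (l < k1)%nat ->
  indic (inH d L k1 k2 b (S l)) * droot d (pbj d k1 k2 f b (S l)) <=
  RInt F (INR l * dx k1) (INR (S l) * dx k1)
  + (2 * eta * droot d (Linf_norm d f) + droot d (Linf_norm d f * (Kbox d * dx k1 * dy k1 k2))).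
Proof.
  intros Hl. pose proof (dx_pos k1 Hk1). pose proof (dy_pos k1 k2 Hk1 Hk2).
  pose proof (grid_le_1 k1 l Hk1 ltac:(lia)). pose proof (grid_le_1 k1 (S l) Hk1 Hl).
  pose proof Linf_norm_f_nonneg as HL0. pose proof (Kbox_pos d Hd).
  assert (INR l * dx k1 <= INR (S l) * dx k1) by (rewrite S_INR; nra).
  assert (HI0 : 0 <= RInt F (INR l * dx k1) (INR (S l) * dx k1)).
  { apply RInt_ge_0; [assumption|apply ex_RInt_sub with 0 1; lra || apply ex_RInt_J_integrand|].
    intros; apply J_integrand_nonneg. }
  set (e := droot d (Linf_norm d f * (Kbox d * dx k1 * dy k1 k2))).
  assert (He : 0 <= e) by apply droot_nonneg. pose proof (droot_nonneg d (Linf_norm d f)).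
  destruct (classic (inH d L k1 k2 b (S l))) as [HH|HH]; [|rewrite indic_false by assumption; nra].
  rewrite indic_true, Rmult_1_l by assumption.
  destruct (inH_value (S l) HH) as [c [[Hc0 HcL] Hc]].
  destruct (classic (exists i, (i < d - 1)%nat /\ b (S l) i = O)) as [[i [Hi Hbi]]|Hnz].
  { rewrite (pbj_empty d k1 k2 b f (S l) i), droot_le0 by (lra || lia || assumption). nra. }
  assert (Hb1 : forall i, (i < d - 1)%nat -> (1 <= b (S l) i)%nat)
    by (intros i Hi; destruct (Nat.eq_dec (b (S l) i) 0); [exfalso; apply Hnz; eauto|lia]).
  set (V := droot d (c * prodn d (stair_box l))).
  pose proof (slab_integral_ge l c Hl Hb1 Hc0 Hc) as HA. fold V in HA.
  pose proof (droot_pbj_le l c Hl Hb1 Hc0 Hc) as HB. fold V in HB.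
  assert (HV : V <= droot d (Linf_norm d f)).
  { apply droot_le; [assumption|]. rewrite <- (Rmult_1_r (Linf_norm d f)), <- (pow1 d), <- prodn_const.
    apply Rmult_le_compat; [assumption|apply prodn_nonneg; intros; apply stair_box_bounds; lia|assumption|].
    apply prodn_le. intros i Hi. pose proof (stair_box_bounds l i Hl Hi). lra. }
  assert (droot d (c * (Kbox d * dx k1 * dy k1 k2)) <= e)
    by (apply droot_le; [assumption|];
        apply Rmult_le_compat_r; [apply Rmult_le_pos; [apply Rmult_le_pos|]|]; lra).
  assert (0 <= V) by apply droot_nonneg. nra.
Qed.

End SlabEstimate.

Definition slab_eta (d k1 : nat) (M eps : R) : R :=
  Rmin (1/4) (eps / (4 * INR k1 * (droot d M + 1))).

Lemma slab_eta_bounds d k1 M eps : (1 <= k1)%nat -> 0 < eps ->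
  0 < slab_eta d k1 M eps < 1/2 /\ INR k1 * (2 * slab_eta d k1 M eps * droot d M) <= eps / 2.
Proof.
  intros Hk He. assert (Hk' : 1 <= INR k1) by (apply (le_INR 1); assumption).
  pose proof (droot_nonneg d M). assert (Hp : 0 < 4 * INR k1 * (droot d M + 1)) by nra.
  pose proof (Rmin_l (1/4) (eps / (4 * INR k1 * (droot d M + 1)))).
  pose proof (Rmin_r (1/4) (eps / (4 * INR k1 * (droot d M + 1)))).
  assert (Heps : eps / (4 * INR k1 * (droot d M + 1)) * (4 * INR k1 * (droot d M + 1)) = eps)
    by (field; lra).
  unfold slab_eta. split; [split; [apply Rmin_glb_lt; [lra|apply Rdiv_lt_0_compat; lra]|lra]|].
  set (e := Rmin _ _) in *. assert (e * (4 * INR k1 * (droot d M + 1)) <= eps).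
  { rewrite <- Heps. apply Rmult_le_compat_r; lra. }
  nra.
Qed.

Lemma volume_error_le d k1 k2 M eps :
  (1 <= d)%nat -> (1 <= k1)%nat -> (1 <= k2)%nat -> 0 <= M -> 0 < eps ->
  2 ^ d * Kbox d * M * INR k1 ^ (d - 1) / eps ^ d <= INR k2 ->
  INR k1 * droot d (M * (Kbox d * dx k1 * dy k1 k2)) <= eps / 2.
Proof.
  intros Hd Hk1 Hk2 HM He HC.
  assert (Hk : 1 <= INR k1) by (apply (le_INR 1); assumption).
  assert (Hk2' : 1 <= INR k2) by (apply (le_INR 1); assumption).
  pose proof (Kbox_pos d Hd) as HK. assert (HE : 0 < eps ^ d) by (apply pow_lt; lra).
  set (p := INR k1 ^ (d - 1)) in *.
  assert (Hp : 1 <= p) by (unfold p; rewrite <- (pow1 (d - 1)); apply pow_incr; lra).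
  assert (Ekd : INR k1 ^ d = INR k1 * p) by (unfold p; replace d with (S (d - 1)) at 1 by lia; reflexivity).
  assert (E2 : 0 < 2 ^ d) by (apply pow_lt; lra).
  assert (HC' : 2 ^ d * Kbox d * M * p <= INR k2 * eps ^ d).
  { apply Rle_trans with (2 ^ d * Kbox d * M * p / eps ^ d * eps ^ d); [right; field; lra|].
    apply Rmult_le_compat_r; lra. }
  cut (droot d (M * (Kbox d * dx k1 * dy k1 k2)) <= eps / (2 * INR k1)).
  { intros H. apply (Rmult_le_compat_l (INR k1)) in H; [|lra].
    replace (INR k1 * (eps / (2 * INR k1))) with (eps / 2) in H by (field; lra). exact H. }
  apply droot_le_of_le_pow; [assumption|apply Rmult_le_pos; [lra|left; apply Rinv_0_lt_compat; lra]|].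
  replace ((eps / (2 * INR k1)) ^ d) with (eps ^ d / (2 ^ d * (INR k1 * p)))
    by (unfold Rdiv; rewrite Rpow_mult_distr, pow_inv, Rpow_mult_distr, Ekd; reflexivity).
  unfold dy, dx.
  apply (Rmult_le_reg_r (2 ^ d * (INR k1 * p) * (INR k1 * INR k1 * INR k2)));
    [apply Rmult_lt_0_compat; [apply Rmult_lt_0_compat|]; nra|].
  replace (eps ^ d / (2 ^ d * (INR k1 * p)) * (2 ^ d * (INR k1 * p) * (INR k1 * INR k1 * INR k2)))
    with (eps ^ d * (INR k1 * INR k1 * INR k2)) by (field; split; nra).
  replace (M * (Kbox d * / INR k1 * (/ INR k1 / INR k2))
           * (2 ^ d * (INR k1 * p) * (INR k1 * INR k1 * INR k2)))
    with (INR k1 * (2 ^ d * Kbox d * M * p)) by (field; split; nra).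
  assert (INR k1 * (2 ^ d * Kbox d * M * p) <= INR k1 * (INR k2 * eps ^ d)) by (apply Rmult_le_compat_l; lra).
  assert (0 <= (INR k1 - 1) * (INR k1 * INR k2 * eps ^ d))
    by (apply Rmult_le_pos; [|repeat apply Rmult_le_pos]; lra).
  nra.
Qed.

Theorem lemma3p3 :
  forall d : nat, (2 <= d)%nat ->
  exists C : R, 0 < C /\
  forall (L : nat) (f : vec -> R),
    (1 <= L)%nat ->
    (forall x, 0 <= f x) ->
    (forall x, ~ in_cube d x -> f x = 0) ->
    piecewise_const d L f ->
    forall (eps : R) (k1 k2 : nat),
      0 < eps ->
      (L <= k1)%nat -> (1 <= k2)%nat ->
      C * Linf_norm d f * INR k1 ^ (d - 1) / eps ^ d <= INR k2 ->
      forall b, in_Phi d k1 k2 b ->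
      Rbar_le (Hsum d L k1 k2 f b) (Rbar_plus (Jbar d f) eps).
Proof.
  intros d Hd. exists (2 ^ d * Kbox d).
  split; [apply Rmult_lt_0_compat; [apply pow_lt; lra|apply Kbox_pos; lia]|].
  intros L f HL Hpos Hout Hpc eps k1 k2 Heps HLk Hk2 HC b Hb.
  assert (Hd1 : (1 <= d)%nat) by lia. assert (Hk1 : (1 <= k1)%nat) by lia.
  pose proof (Linf_norm_f_nonneg d L f HL Hpc Hout) as HM.
  destruct (slab_eta_bounds d k1 (Linf_norm d f) eps Hk1 Heps) as [Heta Herr1].
  set (eta := slab_eta d k1 (Linf_norm d f) eps) in *.
  set (gamma := curve d eta k1 (stair_step k1 k2 b)).
  set (gamma' := velocity d eta k1 (stair_step k1 k2 b)).
  assert (HJ : Rbar_le (Jfun d f gamma gamma') (Jbar d f)).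
  { apply Lub_Rbar_correct. exists gamma, gamma'. split; [|reflexivity].
    apply curve_admissible; auto using stair_step_nonneg. }
  assert (Hmain : Hsum d L k1 k2 f b <= Jfun d f gamma gamma' + eps).
  { unfold Hsum. rewrite rsum_sum_f by assumption.
    eapply Rle_trans; [apply rsum_le; intros l Hl; apply (slab_bound d L f k1 k2 b eta); auto; lia|].
    rewrite rsum_plus, rsum_const, <- (RInt_slabs _ k1 Hk1)
      by (apply (ex_RInt_J_integrand d L f); auto).
    pose proof (volume_error_le d k1 k2 (Linf_norm d f) eps Hd1 Hk1 Hk2 HM Heps HC).
    change (Jfun d f gamma gamma') with (RInt (J_integrand d f gamma gamma') 0 1). subst gamma gamma'. lra. }
  destruct (Jbar d f) as [jb| |]; simpl in *; [lra|exact I|contradiction].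
Qed.
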